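(* Let $\Omega\subset\mathbb{R}^3$ be the unit ball. For $r_1\in(0,1)$, $\sigma_1>0$ let $R_{\sigma_1,r_1}:H^{-1/2}(\partial\Omega)\to H^{1/2}(\partial\Omega)$ be the Neumann-to-Dirichlet map of the three-dimensional core-shell problem and $R$ the Neumann-to-Dirichlet map of the homogeneous ball problem (defined in the context). Then: (1) for any fixed $r_1\in(0,1)$, $\|R_{\sigma_1,r_1}-R\|\to0$ as $\sigma_1\to1$; (2) for any fixed $\sigma_1>0$, $\|R_{\sigma_1,r_1}-R\|\to0$ as $r_1\to0$. Here $\|\cdot\|$ is the operator norm from $H^{-1/2}(\partial\Omega)$ to $H^{1/2}(\partial\Omega)$.
   Context: Spherical coordinates $(r,\theta,\phi)$, $\mu=\cos\theta$. $I_{n+1/2},K_{n+1/2}$ are modified Bessel functions of first and second kind of order $n+\tfrac12$; $P_n^{|m|}$ are associated Legendre functions; $g_{nm}=(g,P_n^{|m|}(\mu)e^{im\phi})$ for $n\ge0$, $|m|\le n$. Let $\Delta$ denote the Laplacian in $\mathbb{R}^3$. Core-shell problem: given $r_1,\sigma_1$ and $g\in H^{-1/2}(\partial\Omega)$, $\psi$ solves $\Delta\psi-\sigma_1^{-1}\psi=0$ in $r<r_1$, $\Delta\psi-\psi=0$ in $r_1<r<1$, $\psi|_{r=r_1}^+=\psi|_{r=r_1}^-$, $\partial_r\psi|_{r=r_1}^+=\sigma_1\partial_r\psi|_{r=r_1}^-$ ($\pm$ = limits from outside/inside the sphere $r=r_1$), $\partial_r\psi|_{r=1}=g$, $\psi$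 bounded at $r=0$ and as $\mu\to\pm1$; $R_{\sigma_1,r_1}(g)=\psi|_{r=1}$. Explicitly $R_{\sigma_1,r_1}(g)=\sum_{n\ge0}\sum_{m=-n}^n\frac{\rho_nK_{n+1/2}(1)-I_{n+1/2}(1)}{\rho_nK_{n+1/2}'(1)-I_{n+1/2}'(1)}g_{nm}P_n^{|m|}(\mu)e^{im\phi}$, with $\rho_n=\frac{\sigma_1I_{n+1/2}'(r_1/\sqrt{\sigma_1})I_{n+1/2}(r_1)-I_{n+1/2}(r_1/\sqrt{\sigma_1})I_{n+1/2}'(r_1)}{\sigma_1I_{n+1/2}'(r_1/\sqrt{\sigma_1})K_{n+1/2}(r_1)-I_{n+1/2}(r_1/\sqrt{\sigma_1})K_{n+1/2}'(r_1)}$. Homogeneous problem: $\Delta\Psi-\Psi=0$ in $r<1$, $\partial_r\Psi|_{r=1}=g$, $\Psi$ bounded at $0$; $R(g)=\Psi|_{r=1}=\sum_{n\ge0}\sum_{m=-n}^n\frac{I_{n+1/2}(1)}{I_{n+1/2}'(1)}g_{nm}P_n^{|m|}(\mu)e^{im\phi}$. *)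

From Stdlib Require Import Reals Factorial.
From Coquelicot Require Import Coquelicot.
Open Scope R_scope.

Definition Gamma (y : R) : R :=
  RInt_gen (fun t => Rpower t (y - 1) * exp (- t)) (at_right 0) (Rbar_locally p_infty).

Definition besselI (nu x : R) : R :=
  Series (fun k => Rpower (x / 2) (2 * INR k + nu)
                   / (INR (Factorial.fact k) * Gamma (INR k + nu + 1))).

Definition besselK (nu x : R) : R :=
  RInt_gen (fun t => exp (- x * cosh t) * cosh (nu * t)) (at_point 0) (Rbar_locally p_infty).

Definition Ih (n : nat) (x : R) : R := besselI (INR n + / 2) x.
Definition Kh (n : nat) (x : R) : R := besselK (INR n + / 2) x.
Definition dIh (n : nat) (x : R) : R := Derive (Ih n) x.
Definition dKh (n : nat) (x : R) : R := Derive (Kh n) x.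

Definition rho (s1 r1 : R) (n : nat) : R :=
  let a := r1 / sqrt s1 in
  (s1 * dIh n a * Ih n r1 - Ih n a * dIh n r1)
  / (s1 * dIh n a * Kh n r1 - Ih n a * dKh n r1).

Definition lam_cs (s1 r1 : R) (n : nat) : R :=
  (rho s1 r1 n * Kh n 1 - Ih n 1) / (rho s1 r1 n * dKh n 1 - dIh n 1).

Definition lam_hom (n : nat) : R := Ih n 1 / dIh n 1.

(** Distributions on the unit sphere are represented by their coefficients
    c n j (n >= 0, 0 <= j <= 2n, j <-> m = j - n) in an L^2-orthonormal basis
    of spherical harmonics Y_n^m; entries with j > 2n are irrelevant. *)
Definition sph_coeffs := nat -> nat -> C.

Definition hs_term (s : R) (c : sph_coeffs) (n : nat) : R :=
  Rpower (1 + INR n * (INR n + 1)) s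
  * sum_f_R0 (fun j => (Cmod (c n j)) ^ 2) (2 * n).

Definition hs_normsq (s : R) (c : sph_coeffs) : Rbar :=
  Lim_seq (sum_n (hs_term s c)).

Definition in_Hs (s : R) (c : sph_coeffs) : Prop := ex_series (hs_term s c).

Definition multiplier (lam : nat -> R) (c : sph_coeffs) : sph_coeffs :=
  fun n j => Cmult (RtoC (lam n)) (c n j).

(** Operator norm H^{-1/2} -> H^{1/2}: inf of M >= 0 with ||T c||_{1/2} <= M ||c||_{-1/2}
    for all c in H^{-1/2} (equal to +oo if there is no such M). *)
Definition opnorm_m12_12 (T : sph_coeffs -> sph_coeffs) : Rbar :=
  Glb_Rbar (fun M => 0 <= M /\
    forall c, in_Hs (- / 2) c ->
      Rbar_le (hs_normsq (/ 2) (T c)) (Finite (M ^ 2 * Series (hs_term (- / 2) c)))).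

Definition NtD_cs (s1 r1 : R) : sph_coeffs -> sph_coeffs := multiplier (lam_cs s1 r1).
Definition NtD_hom : sph_coeffs -> sph_coeffs := multiplier lam_hom.

Definition NtD_diff (s1 r1 : R) : sph_coeffs -> sph_coeffs :=
  fun c n j => Cminus (NtD_cs s1 r1 c n j) (NtD_hom c n j).

(* On spherical harmonics of degree n both Neumann-to-Dirichlet maps are multiplications
   by the eigenvalues lam_cs n and lam_hom n, so the H^{-1/2} -> H^{1/2} norm of their
   difference is at most sup_n 2 nu |lam_cs n - lam_hom n|, with nu = n + 1/2.

   Writing I_nu(x) = (x/2)^nu g(x^2/4), with g an entire series with positive coefficients,
   gives x I_nu'(x) / I_nu(x) = h(x) = nu + 2 phi(x^2/4), where 0 <= phi(y) <= 2y and phi is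
   Lipschitz on [0, 1/2]. K_nu is positive, decreasing and convex, so K_nu(r1) >= K_nu(1) and
   K_nu'(r1) <= K_nu'(1) <= 0. With a = r1 / sqrt sigma1 the numerator of rho_n equals
   I(a) I(r1) E / r1, E = sigma1^{3/2} h(a) - h(r1), and the eigenvalue gap is bounded by
   r1^nu |E| / nu times constants independent of n. As sigma1 -> 1, E = O(|sigma1 - 1| nu);
   as r1 -> 0, r1^nu / r1 <= sqrt r1 for n >= 1, while for n = 0 the gap is controlled
   through K_0'(1) / K_0(1) instead of 1 / r1. *)

From Stdlib Require Import Reals Factorial Lra Lia Psatz Classical.
From Coquelicot Require Import Coquelicot.
Open Scope R_scope.

(** * Improper integrals and series of nonnegative terms *)

Lemma is_RInt_gen_of_eps {Fa Fb : (R -> Prop) -> Prop} {FFa : Filter Fa} {FFb : Filter Fb}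
  (f : R -> R) (F : R -> R -> R) (L : R) :
  filter_prod Fa Fb (fun ab => is_RInt f (fst ab) (snd ab) (F (fst ab) (snd ab))) ->
  (forall eps, 0 < eps -> exists Pa Pb, Fa Pa /\ Fb Pb /\
     forall a b, Pa a -> Pb b -> Rabs (F a b - L) < eps) ->
  is_RInt_gen f Fa Fb L.
Proof.
  intros Hint Hlim P [e He]. unfold filtermapi.
  destruct (Hlim e (cond_pos e)) as [Pa [Pb [HPa [HPb HF]]]].
  assert (Hclose : filter_prod Fa Fb (fun ab => P (F (fst ab) (snd ab)))).
  { apply Filter_prod with Pa Pb; auto. intros a b Ha Hb. apply He, HF; auto. }
  generalize (filter_and _ _ Hint Hclose). apply filter_imp.
  intros [a b] [Hab HP]. exists (F a b). split; assumption.
Qed.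

Lemma is_RInt_gen_bounded_monotone {Fa Fb : (R -> Prop) -> Prop}
  {FFa : ProperFilter Fa} {FFb : ProperFilter Fb}
  (f : R -> R) (F : R -> R -> R) (Sa Sb : R -> Prop) (M : R) :
  Fa Sa -> Fb Sb ->
  (forall a b, Sa a -> Sb b -> is_RInt f a b (F a b)) ->
  (forall a b, Sa a -> Sb b -> F a b <= M) ->
  (forall a0 b0, Sa a0 -> Sb b0 -> exists Pa Pb, Fa Pa /\ Fb Pb /\
     forall a b, Pa a -> Pb b -> F a0 b0 <= F a b) ->
  exists L, is_RInt_gen f Fa Fb L /\ forall a b, Sa a -> Sb b -> F a b <= L.
Proof.
  intros HSa HSb Hint Hbnd Hmono.
  set (E := fun z => exists a b, Sa a /\ Sb b /\ z = F a b).
  destruct (filter_ex _ HSa) as [a1 Ha1].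
  destruct (filter_ex _ HSb) as [b1 Hb1].
  assert (HbE : bound E) by (exists M; intros z [a [b [Ha [Hb ->]]]]; auto).
  assert (Hne : exists z, E z) by (exists (F a1 b1), a1, b1; auto).
  destruct (completeness E HbE Hne) as [L [Hub Hlub]].
  assert (HleL : forall a b, Sa a -> Sb b -> F a b <= L)
    by (intros a b Ha Hb; apply Hub; exists a, b; auto).
  exists L. split; [| exact HleL].
  apply is_RInt_gen_of_eps with F.
  - apply Filter_prod with Sa Sb; auto.
  - intros eps Heps.
    assert (Hnear : exists a0 b0, Sa a0 /\ Sb b0 /\ L - eps < F a0 b0).
    { apply NNPP. intro Hfar.
      assert (L <= L - eps); [| lra].
      apply Hlub. intros z [a [b [Ha [Hb ->]]]].
      apply Rnot_lt_le. intro Hlt. apply Hfar. exists a, b. auto. }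
    destruct Hnear as [a0 [b0 [Ha0 [Hb0 Hlt]]]].
    destruct (Hmono a0 b0 Ha0 Hb0) as [Pa [Pb [HPa [HPb Hm]]]].
    exists (fun a => Pa a /\ Sa a), (fun b => Pb b /\ Sb b).
    split; [apply filter_and; auto |]. split; [apply filter_and; auto |].
    intros a b [Ha Ha'] [Hb Hb'].
    specialize (Hm a b Ha Hb). specialize (HleL a b Ha' Hb').
    apply Rabs_def1; lra.
Qed.

Lemma is_RInt_gen_ge_0 (a : R) (g : R -> R) (l : R) :
  is_RInt_gen g (at_point a) (Rbar_locally p_infty) l ->
  (forall x, a <= x -> 0 <= g x) -> 0 <= l.
Proof.
  intros Hg Hpos.
  assert (Hprod : forall Q : R -> R -> Prop, (forall y, a < y -> Q a y) ->
            filter_prod (at_point a) (Rbar_locally p_infty) (fun ab => Q (fst ab) (snd ab))).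
  { intros Q HQ. apply Filter_prod with (fun x => x = a) (fun y => a < y).
    - reflexivity.
    - exists a. auto.
    - intros x y -> Hy. apply HQ, Hy. }
  assert (Habs : Rabs l <= l).
  { apply (RInt_gen_norm (Fa := at_point a) (Fb := Rbar_locally p_infty) g g l l); auto.
    - apply (Hprod (fun x y => x <= y)). intros; lra.
    - apply (Hprod (fun x y => forall z, x <= z <= y -> norm (g z) <= g z)).
      intros y Hy z Hz. apply Req_le, Rabs_pos_eq, Hpos. lra. }
  generalize (Rabs_pos l). lra.
Qed.

Lemma at_right_0_lt (c : R) : 0 < c -> at_right 0 (fun a => 0 < a < c).
Proof.
  intros Hc. exists (mkposreal c Hc). intros z Hz Hz0.
  apply Rabs_def2 in Hz. unfold minus, plus, opp in Hz; simpl in Hz. lra.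
Qed.

Lemma p_infty_gt (c : R) : Rbar_locally p_infty (fun b => c < b).
Proof. exists c. auto. Qed.

Lemma sum_n_le_series (a : nat -> R) (l : R) (k : nat) :
  (forall n, 0 <= a n) -> is_series a l -> sum_n a k <= l.
Proof.
  intros Ha Hs. apply (is_lim_seq_incr_compare (sum_n a)); [apply Hs |].
  intros n. rewrite sum_Sn. unfold plus; simpl. specialize (Ha (S n)). lra.
Qed.

Lemma term_le_series (a : nat -> R) (l : R) (k : nat) :
  (forall n, 0 <= a n) -> is_series a l -> a k <= l.
Proof.
  intros Ha Hs. eapply Rle_trans; [| apply (sum_n_le_series a l k); auto].
  destruct k as [|k]; [rewrite sum_O; lra |].
  rewrite sum_Sn. unfold plus; simpl.
  assert (0 <= sum_n a k); [| lra].
  rewrite sum_n_Reals. apply cond_pos_sum. auto.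
Qed.

(** * Elementary inequalities *)

Lemma exp_le_compat (x y : R) : x <= y -> exp x <= exp y.
Proof. intros [H | ->]; [left; apply exp_increasing; auto | lra]. Qed.

Lemma pow_div_fact_le_exp (s : R) (m : nat) : 0 <= s -> s ^ m / INR (fact m) <= exp s.
Proof.
  intros Hs. eapply Rle_trans; [| apply (exp_ge_taylor s m Hs)].
  assert (Hterm : forall k, 0 <= s ^ k / INR (fact k)).
  { intros k. apply Rmult_le_pos; [apply pow_le; auto |].
    apply Rlt_le, Rinv_0_lt_compat, INR_fact_lt_0. }
  destruct m as [|m]; [simpl; lra |].
  rewrite tech5. generalize (cond_pos_sum _ m Hterm). lra.
Qed.

Lemma ln_le_0 (t : R) : 0 < t <= 1 -> ln t <= 0.
Proof.
  intros [H0 [H1 | ->]]; [| rewrite ln_1; lra].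
  rewrite <- ln_1. left. apply ln_increasing; auto.
Qed.

Lemma Rpower_pos (x y : R) : 0 < Rpower x y.
Proof. apply exp_pos. Qed.

Lemma Rpower_le_1 (t p : R) : 0 < t <= 1 -> 0 <= p -> Rpower t p <= 1.
Proof.
  intros Ht Hp. unfold Rpower. rewrite <- exp_0. apply exp_le_compat.
  generalize (ln_le_0 t Ht). nra.
Qed.

Lemma Rpower_le_base (t p : R) : 0 < t <= 1 -> 1 <= p -> Rpower t p <= t.
Proof.
  intros Ht Hp. unfold Rpower. rewrite <- (exp_ln t) at 2 by lra.
  apply exp_le_compat. generalize (ln_le_0 t Ht). nra.
Qed.

Lemma Rpower_le_pow (t p : R) (m : nat) : 1 <= t -> p <= INR m -> Rpower t p <= t ^ m.
Proof. intros Ht Hp. rewrite <- Rpower_pow by lra. apply Rle_Rpower; auto. Qed.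

Lemma Rpower_le_antimono (r p q : R) : 0 < r < 1 -> q <= p -> Rpower r p <= Rpower r q.
Proof.
  intros Hr Hpq. unfold Rpower. apply exp_le_compat.
  assert (ln r < 0) by (rewrite <- ln_1; apply ln_increasing; lra). nra.
Qed.

Lemma Rdiv_le_of_le_mul (a b c : R) : 0 < c -> a <= b * c -> a / c <= b.
Proof.
  intros Hc H. apply (Rmult_le_reg_r c); [exact Hc |].
  unfold Rdiv. rewrite Rmult_assoc, Rinv_l, Rmult_1_r by lra. exact H.
Qed.

Lemma exp_neg_le_fact_div_pow (s : R) (m : nat) : 0 < s -> exp (- s) <= INR (fact m) / s ^ m.
Proof.
  intros Hs. generalize (pow_div_fact_le_exp s m (Rlt_le _ _ Hs)) (pow_lt s m Hs) (INR_fact_lt_0 m).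
  intros H Hp Hf. rewrite exp_Ropp.
  replace (INR (fact m) / s ^ m) with (/ (s ^ m / INR (fact m))) by (field; lra).
  apply Rinv_le_contravar; [apply Rdiv_lt_0_compat |]; assumption.
Qed.

Lemma pow_mul_exp_neg_le (t : R) (m : nat) : 0 < t -> t ^ m * exp (- t) <= INR (fact (S m)) / t.
Proof.
  intros Ht. generalize (exp_neg_le_fact_div_pow t (S m) Ht) (pow_lt t m Ht). intros H Hp.
  replace (INR (fact (S m)) / t) with (t ^ m * (INR (fact (S m)) / t ^ S m)) by (simpl; field; lra).
  apply Rmult_le_compat_l; lra.
Qed.

Lemma exp_pow_INR (t : R) (m : nat) : exp t ^ m = exp (INR m * t).
Proof.
  induction m as [|m IHm]; [simpl; rewrite Rmult_0_l, exp_0; reflexivity |].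
  rewrite S_INR. simpl. rewrite IHm, <- exp_plus. f_equal. ring.
Qed.

(** * The Gamma function *)

Lemma is_derive_Rpower (y x : R) : 0 < x -> is_derive (fun t => Rpower t y) x (y * Rpower x (y - 1)).
Proof. intros Hx. apply is_derive_Reals, derivable_pt_lim_power, Hx. Qed.

Lemma ex_derive_Rpower (y x : R) : 0 < x -> ex_derive (fun t => Rpower t y) x.
Proof. intros Hx. eexists. apply is_derive_Rpower, Hx. Qed.

Lemma Derive_Rpower (y x : R) : 0 < x -> Derive (fun t => Rpower t y) x = y * Rpower x (y - 1).
Proof. intros Hx. apply is_derive_unique, is_derive_Rpower, Hx. Qed.

Definition Gamma_integrand (y t : R) : R := Rpower t (y - 1) * exp (- t).

Lemma Gamma_integrand_continuous (y t : R) : 0 < t -> continuous (Gamma_integrand y) t.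
Proof.
  intros Ht. apply (ex_derive_continuous (Gamma_integrand y)). unfold Gamma_integrand.
  apply ex_derive_mult; [apply ex_derive_Rpower, Ht | auto_derive; auto].
Qed.

Lemma ex_RInt_Gamma_integrand (y a b : R) : 0 < a -> 0 < b -> ex_RInt (Gamma_integrand y) a b.
Proof.
  intros Ha Hb. apply (ex_RInt_continuous (V := R_CompleteNormedModule)).
  intros z Hz. apply Gamma_integrand_continuous.
  assert (0 < Rmin a b) by (apply Rmin_glb_lt; auto). lra.
Qed.

Lemma Gamma_integrand_pos (y t : R) : 0 < t -> 0 < Gamma_integrand y t.
Proof. intros _. apply Rmult_lt_0_compat; apply exp_pos. Qed.

Lemma RInt_Gamma_integrand_ge_0 (y a b : R) : 0 < a -> a <= b -> 0 <= RInt (Gamma_integrand y) a b.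
Proof.
  intros Ha Hab. apply RInt_ge_0; auto; [apply ex_RInt_Gamma_integrand; lra |].
  intros x Hx. left. apply Gamma_integrand_pos. lra.
Qed.

Lemma Gamma_integrand_le (y t : R) (m : nat) : 1 <= y -> y - 1 <= INR m -> 0 < t ->
  Gamma_integrand y t <= (1 + 2 ^ S m * INR (fact (S m))) * exp (- (t / 2)).
Proof.
  intros Hy Hm Ht. unfold Gamma_integrand.
  generalize (exp_pos (- (t / 2))) (pow_lt 2 (S m) ltac:(lra)) (INR_fact_lt_0 (S m)) (Rpower_pos t (y - 1)).
  intros He H2 Hf Hp.
  assert (0 <= 2 ^ S m * INR (fact (S m))) by (apply Rmult_le_pos; lra).
  destruct (Rle_dec t 1) as [Ht1 | Ht1].
  - assert (Rpower t (y - 1) <= 1) by (apply Rpower_le_1; lra).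
    assert (exp (- t) <= exp (- (t / 2))) by (apply exp_le_compat; lra).
    nra.
  - assert (Rpower t (y - 1) <= t ^ m) by (apply Rpower_le_pow; lra).
    assert (Hhalf : t ^ m * exp (- (t / 2)) <= 2 ^ S m * INR (fact (S m))).
    { replace (t ^ m) with (2 ^ m * (t / 2) ^ m) by (rewrite <- Rpow_mult_distr; f_equal; field).
      generalize (pow_mul_exp_neg_le (t / 2) m ltac:(lra)) (pow_lt 2 m ltac:(lra)).
      intros Hb H2m. simpl (2 ^ S m).
      assert (INR (fact (S m)) / (t / 2) <= 2 * INR (fact (S m))).
      { apply (Rmult_le_reg_r (t / 2)); [lra |].
        replace (INR (fact (S m)) / (t / 2) * (t / 2)) with (INR (fact (S m))) by (field; lra). nra. }
      nra. }
    replace (exp (- t)) with (exp (- (t / 2)) * exp (- (t / 2))) by (rewrite <- exp_plus; f_equal; field).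
    assert (Rpower t (y - 1) * exp (- (t / 2)) <= t ^ m * exp (- (t / 2))) by nra.
    nra.
Qed.

Lemma is_RInt_exp_neg_half (C a b : R) :
  is_RInt (fun t => C * exp (- (t / 2))) a b (2 * C * (exp (- (a / 2)) - exp (- (b / 2)))).
Proof.
  replace (2 * C * (exp (- (a / 2)) - exp (- (b / 2)))) with
    ((fun t => - 2 * C * exp (- (t / 2))) b - (fun t => - 2 * C * exp (- (t / 2))) a) by (simpl; ring).
  apply (is_RInt_derive (fun t => - 2 * C * exp (- (t / 2)))).
  - intros x _. auto_derive; auto. unfold Rdiv. set (e := exp _). field.
  - intros x _. apply (ex_derive_continuous (fun t => C * exp (- (t / 2)))). auto_derive. auto.
Qed.

Lemma RInt_Gamma_integrand_le (y a b : R) (m : nat) : 1 <= y -> y - 1 <= INR m -> 0 < a -> a <= b ->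
  RInt (Gamma_integrand y) a b <= 2 * (1 + 2 ^ S m * INR (fact (S m))).
Proof.
  intros Hy Hm Ha Hab. set (C := 1 + 2 ^ S m * INR (fact (S m))).
  assert (HC : 0 < C) by (unfold C; generalize (pow_lt 2 (S m) ltac:(lra)) (INR_fact_lt_0 (S m)); nra).
  eapply Rle_trans.
  - apply (RInt_le _ (fun t => C * exp (- (t / 2)))); auto.
    + apply ex_RInt_Gamma_integrand; lra.
    + eexists; apply is_RInt_exp_neg_half.
    + intros x Hx. apply Gamma_integrand_le; auto; lra.
  - rewrite (is_RInt_unique _ _ _ _ (is_RInt_exp_neg_half C a b)).
    generalize (exp_pos (- (b / 2))). intros.
    assert (exp (- (a / 2)) <= 1) by (rewrite <- exp_0; apply exp_le_compat; lra).
    nra.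
Qed.

Lemma Gamma_spec (y : R) : 1 <= y ->
  is_RInt_gen (Gamma_integrand y) (at_right 0) (Rbar_locally p_infty) (Gamma y) /\ 0 < Gamma y.
Proof.
  intros Hy. destruct (INR_unbounded y) as [m Hm].
  destruct (is_RInt_gen_bounded_monotone (Fa := at_right 0) (Fb := Rbar_locally p_infty) (Gamma_integrand y) (RInt (Gamma_integrand y))
              (fun a => 0 < a < 1) (fun b => 1 < b) (2 * (1 + 2 ^ S m * INR (fact (S m)))))
    as [L [HL HleL]].
  - apply at_right_0_lt; lra.
  - apply p_infty_gt.
  - intros a b Ha Hb. apply (RInt_correct (V := R_CompleteNormedModule)).
    apply ex_RInt_Gamma_integrand; lra.
  - intros a b Ha Hb. apply RInt_Gamma_integrand_le; lra.
  - intros a0 b0 Ha0 Hb0. exists (fun a => 0 < a < a0), (fun b => b0 < b).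
    split; [apply at_right_0_lt; lra |]. split; [apply p_infty_gt |].
    intros a b Ha Hb.
    rewrite <- (RInt_Chasles (Gamma_integrand y) a a0 b) by (apply ex_RInt_Gamma_integrand; lra).
    rewrite <- (RInt_Chasles (Gamma_integrand y) a0 b0 b) by (apply ex_RInt_Gamma_integrand; lra).
    unfold plus; simpl.
    generalize (RInt_Gamma_integrand_ge_0 y a a0 ltac:(lra) ltac:(lra))
               (RInt_Gamma_integrand_ge_0 y b0 b ltac:(lra) ltac:(lra)).
    lra.
  - replace (Gamma y) with L by (symmetry; apply (is_RInt_gen_unique (Gamma_integrand y)), HL).
    split; [exact HL |].
    eapply Rlt_le_trans; [| apply (HleL (/ 2) 2); lra].
    apply RInt_gt_0; [lra | intros x Hx; apply Gamma_integrand_pos; lra |].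
    intros x Hx. apply Gamma_integrand_continuous. lra.
Qed.

(* The integrand is the derivative of - t^y e^{-t}. *)
Lemma is_RInt_Gamma_succ_integrand (y a b : R) : 0 < a < b ->
  is_RInt (fun t => Gamma_integrand (y + 1) t - y * Gamma_integrand y t) a b
    (Rpower a y * exp (- a) - Rpower b y * exp (- b)).
Proof.
  intros Hab.
  replace (Rpower a y * exp (- a) - Rpower b y * exp (- b)) with
    ((fun t => - (Rpower t y * exp (- t))) b - (fun t => - (Rpower t y * exp (- t))) a) by (simpl; ring).
  apply (is_RInt_derive (fun t => - (Rpower t y * exp (- t)))).
  - intros x Hx. rewrite Rmin_left in Hx by lra. rewrite Rmax_right in Hx by lra.
    unfold Gamma_integrand. replace (y + 1 - 1) with y by ring.
    auto_derive; [apply ex_derive_Rpower; lra |].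
    rewrite Derive_Rpower by lra. ring.
  - intros x Hx. rewrite Rmin_left in Hx by lra. rewrite Rmax_right in Hx by lra.
    apply (continuous_minus (Gamma_integrand (y + 1)) (fun t => y * Gamma_integrand y t)).
    + apply Gamma_integrand_continuous. lra.
    + apply (continuous_scal_r y (Gamma_integrand y)). apply Gamma_integrand_continuous. lra.
Qed.

Lemma Gamma_boundary_term_vanishes (y eps : R) : 1 <= y -> 0 < eps ->
  exists Pa Pb, at_right 0 Pa /\ Rbar_locally p_infty Pb /\ forall a b, Pa a -> Pb b ->
    Rabs (Rpower a y * exp (- a) - Rpower b y * exp (- b) - 0) < eps.
Proof.
  intros Hy Heps. destruct (INR_unbounded y) as [m Hm].
  set (F := INR (fact (S m))). assert (HF : 0 < F) by apply INR_fact_lt_0.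
  exists (fun a => 0 < a < Rmin 1 (eps / 2)), (fun b => Rmax 1 (2 * F / eps) < b).
  split; [apply at_right_0_lt, Rmin_glb_lt; lra |]. split; [apply p_infty_gt |].
  intros a b Ha Hb.
  generalize (Rmin_l 1 (eps / 2)) (Rmin_r 1 (eps / 2)) (Rmax_l 1 (2 * F / eps)) (Rmax_r 1 (2 * F / eps)).
  intros Ha1 Ha2 Hb1 Hb2.
  generalize (exp_pos (- a)) (exp_pos (- b)) (Rpower_pos a y) (Rpower_pos b y). intros Pa Pb Pa' Pb'.
  assert (Hsmall : Rpower a y * exp (- a) <= a).
  { generalize (Rpower_le_base a y ltac:(lra) ltac:(lra)).
    assert (exp (- a) <= 1) by (rewrite <- exp_0; apply exp_le_compat; lra). nra. }
  assert (Hlarge : Rpower b y * exp (- b) <= F / b).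
  { generalize (Rpower_le_pow b y m ltac:(lra) ltac:(lra)) (pow_mul_exp_neg_le b m ltac:(lra)).
    fold F. nra. }
  assert (F / b < eps / 2).
  { apply (Rmult_lt_reg_r (2 * b / eps)); [apply Rdiv_lt_0_compat; lra |].
    replace (F / b * (2 * b / eps)) with (2 * F / eps) by (field; lra).
    replace (eps / 2 * (2 * b / eps)) with b by (field; lra). lra. }
  rewrite Rminus_0_r. apply Rabs_def1; nra.
Qed.

Lemma Gamma_succ (y : R) : 1 <= y -> Gamma (y + 1) = y * Gamma y.
Proof.
  intros Hy.
  destruct (Gamma_spec y Hy) as [Hy_int _].
  destruct (Gamma_spec (y + 1) ltac:(lra)) as [Hy1_int _].
  assert (Hzero : is_RInt_gen (fun t => Gamma_integrand (y + 1) t - y * Gamma_integrand y t)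
                      (at_right 0) (Rbar_locally p_infty) 0).
  { apply is_RInt_gen_of_eps with (fun a b => Rpower a y * exp (- a) - Rpower b y * exp (- b)).
    - apply Filter_prod with (fun a => 0 < a < 1) (fun b => 1 < b);
        [apply at_right_0_lt; lra | apply p_infty_gt |].
      intros a b Ha Hb. simpl. apply is_RInt_Gamma_succ_integrand. lra.
    - intros eps Heps. apply Gamma_boundary_term_vanishes; auto. }
  assert (Hdiff : is_RInt_gen (fun t => Gamma_integrand (y + 1) t - y * Gamma_integrand y t)
                    (at_right 0) (Rbar_locally p_infty) (minus (Gamma (y + 1)) (scal y (Gamma y)))).
  { eapply is_RInt_gen_ext; [| exact (is_RInt_gen_minus _ _ _ _ Hy1_int (is_RInt_gen_scal _ y _ Hy_int))].
    apply filter_forall. reflexivity. }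
  generalize (is_RInt_gen_unique _ _ Hzero) (is_RInt_gen_unique _ _ Hdiff). intros E1 E2.
  rewrite E1 in E2. unfold minus, scal, plus, opp in E2; simpl in E2. unfold mult in E2; simpl in E2.
  lra.
Qed.

(** * Power series with factorially dominated coefficients *)

Definition fact_dominated (B : R) (a : nat -> R) : Prop :=
  forall k, 0 <= a k <= B / INR (fact k).

Lemma INR_fact_ge_1 (k : nat) : 1 <= INR (fact k).
Proof. apply (le_INR 1), lt_O_fact. Qed.

Lemma fact_dominated_le (B : R) (a : nat -> R) (k : nat) : fact_dominated B a -> 0 <= a k <= B.
Proof.
  intros Ha. destruct (Ha k) as [H0 H1]. split; [exact H0 |].
  assert (Hf := INR_fact_ge_1 k).
  assert (HB : B = B / INR (fact k) * INR (fact k)) by (field; lra).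
  rewrite HB. nra.
Qed.

Lemma PS_derive_fact_dominated (B : R) (a : nat -> R) :
  fact_dominated B a -> fact_dominated B (PS_derive a).
Proof.
  intros Ha k. unfold PS_derive. destruct (Ha (S k)) as [H0 H1].
  assert (HSk : 0 < INR (S k)) by (apply lt_0_INR; lia).
  split; [nra |].
  replace (B / INR (fact k)) with (INR (S k) * (B / INR (fact (S k)))).
  - apply Rmult_le_compat_l; lra.
  - change (fact (S k)) with (S k * fact k)%nat. rewrite mult_INR.
    generalize (INR_fact_lt_0 k). intros. field. lra.
Qed.

Lemma PSeries_fact_dominated (B : R) (a : nat -> R) (y : R) :
  fact_dominated B a -> 0 <= y <= / 2 ->
  ex_series (fun k => a k * y ^ k) /\ 0 <= PSeries a y <= 2 * B.
Proof.
  intros Ha Hy.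
  assert (Hgeom : is_series (fun k => B * (/ 2) ^ k) (2 * B)).
  { replace (2 * B) with (scal B (/ (1 - / 2))) by (unfold scal; simpl; unfold mult; simpl; field).
    apply (is_series_scal_l B (fun k => (/ 2) ^ k)), is_series_geom. rewrite Rabs_pos_eq; lra. }
  assert (Hterm : forall k, 0 <= a k * y ^ k <= B * (/ 2) ^ k).
  { intros k. destruct (fact_dominated_le B a k Ha). split.
    - apply Rmult_le_pos; [lra | apply pow_le; lra].
    - apply Rmult_le_compat; try lra; [apply pow_le; lra | apply pow_incr; lra]. }
  assert (Hex : ex_series (fun k => a k * y ^ k)).
  { apply (ex_series_le (fun k => a k * y ^ k) (fun k => B * (/ 2) ^ k)); [| eexists; exact Hgeom].
    intros k. unfold norm; simpl; unfold abs; simpl. rewrite Rabs_pos_eq; apply Hterm. }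
  split; [exact Hex |]. unfold PSeries. split.
  - eapply Rle_trans; [| apply (term_le_series (fun k => a k * y ^ k) _ O); [apply Hterm | apply Series_correct, Hex]].
    apply Hterm.
  - rewrite <- (is_series_unique _ _ Hgeom). apply Series_le; [exact Hterm | eexists; exact Hgeom].
Qed.

Lemma PSeries_ge_coef0 (a : nat -> R) (y : R) :
  (forall k, 0 <= a k) -> 0 <= y -> ex_series (fun k => a k * y ^ k) -> a O <= PSeries a y.
Proof.
  intros Ha Hy Hex. replace (a O) with (a O * y ^ O) by (simpl; ring).
  apply (term_le_series (fun k => a k * y ^ k)); [| apply Series_correct, Hex].
  intros k. apply Rmult_le_pos; [apply Ha | apply pow_le, Hy].
Qed.

Lemma PSeries_le_mono (a : nat -> R) (y1 y2 : R) :
  (forall k, 0 <= a k) -> 0 <= y1 <= y2 -> ex_series (fun k => a k * y2 ^ k) ->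
  PSeries a y1 <= PSeries a y2.
Proof.
  intros Ha Hy Hex. apply Series_le; [| exact Hex].
  intros k. split; [apply Rmult_le_pos; [apply Ha | apply pow_le; lra] |].
  apply Rmult_le_compat_l; [apply Ha | apply pow_incr; lra].
Qed.

(** * The modified Bessel function of the first kind *)

Definition nu (n : nat) : R := INR n + / 2.

Lemma nu_ge_half (n : nat) : / 2 <= nu n.
Proof. unfold nu. generalize (pos_INR n). lra. Qed.

Lemma Gamma_shift_pos (n k : nat) : 0 < Gamma (INR k + nu n + 1).
Proof.
  apply Gamma_spec. unfold nu. generalize (pos_INR k) (pos_INR n). lra.
Qed.

Lemma Gamma_shift_succ (n k : nat) :
  Gamma (INR (S k) + nu n + 1) = (INR k + nu n + 1) * Gamma (INR k + nu n + 1).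
Proof.
  rewrite S_INR. replace (INR k + 1 + nu n + 1) with ((INR k + nu n + 1) + 1) by ring.
  apply Gamma_succ. unfold nu. generalize (pos_INR k) (pos_INR n). lra.
Qed.

Lemma Gamma_shift_ge (n k : nat) : Gamma (INR 0 + nu n + 1) <= Gamma (INR k + nu n + 1).
Proof.
  induction k as [|k IHk]; [lra |]. rewrite Gamma_shift_succ.
  generalize (Gamma_shift_pos n k) (pos_INR k) (nu_ge_half n). nra.
Qed.

Definition besselI_coef (n k : nat) : R := / (INR (fact k) * Gamma (INR k + nu n + 1)).

Lemma besselI_coef_pos (n k : nat) : 0 < besselI_coef n k.
Proof.
  apply Rinv_0_lt_compat, Rmult_lt_0_compat; [apply INR_fact_lt_0 | apply Gamma_shift_pos].
Qed.

Lemma besselI_coef_fact_dominated (n : nat) : fact_dominated (besselI_coef n O) (besselI_coef n).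
Proof.
  intros k. split; [left; apply besselI_coef_pos |].
  unfold besselI_coef. simpl (fact 0). rewrite Rmult_1_l, Rinv_mult.
  generalize (Gamma_shift_pos n k) (Gamma_shift_pos n 0) (Gamma_shift_ge n k) (INR_fact_lt_0 k).
  intros. unfold Rdiv. rewrite Rmult_comm.
  apply Rmult_le_compat_r; [left; apply Rinv_0_lt_compat; auto |].
  apply Rinv_le_contravar; auto.
Qed.

Lemma CV_radius_besselI_coef (n : nat) : CV_radius (besselI_coef n) = p_infty.
Proof.
  apply CV_radius_infinite_DAlembert.
  - intros k. generalize (besselI_coef_pos n k). lra.
  - apply (is_lim_seq_le_le (fun _ => 0) _ (fun k => / (INR k + 1))).
    + intros k. unfold besselI_coef. rewrite Gamma_shift_succ.
      change (fact (S k)) with (S k * fact k)%nat. rewrite mult_INR, S_INR.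
      generalize (Gamma_shift_pos n k) (INR_fact_lt_0 k) (pos_INR k) (nu_ge_half n). intros.
      set (G := Gamma (INR k + nu n + 1)) in *.
      replace (/ ((INR k + 1) * INR (fact k) * ((INR k + nu n + 1) * G)) / / (INR (fact k) * G))
        with (/ ((INR k + 1) * (INR k + nu n + 1))) by (field; repeat split; lra).
      rewrite Rabs_pos_eq by (left; apply Rinv_0_lt_compat; nra).
      split; [left; apply Rinv_0_lt_compat; nra |].
      apply Rinv_le_contravar; nra.
    + apply is_lim_seq_const.
    + replace (Finite 0) with (Rbar_inv p_infty) by reflexivity.
      apply is_lim_seq_inv; [| discriminate].
      apply (is_lim_seq_le_p_loc INR); [exists O; intros k _; lra | apply is_lim_seq_INR].
Qed.

Definition besselI_series (n : nat) : R -> R := PSeries (besselI_coef n).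
Definition dbesselI_series (n : nat) : R -> R := PSeries (PS_derive (besselI_coef n)).
Definition ddbesselI_series (n : nat) : R -> R := PSeries (PS_derive (PS_derive (besselI_coef n))).

Lemma is_derive_besselI_series (n : nat) (y : R) :
  is_derive (besselI_series n) y (dbesselI_series n y).
Proof. apply is_derive_PSeries. rewrite CV_radius_besselI_coef. exact I. Qed.

Lemma is_derive_dbesselI_series (n : nat) (y : R) :
  is_derive (dbesselI_series n) y (ddbesselI_series n y).
Proof. apply is_derive_PSeries. rewrite CV_radius_derive, CV_radius_besselI_coef. exact I. Qed.

Lemma Ih_eq (n : nat) (x : R) : 0 < x -> Ih n x = Rpower (x / 2) (nu n) * besselI_series n (x * x / 4).
Proof.
  intros Hx. unfold Ih, besselI, besselI_series, PSeries. change (INR n + / 2) with (nu n).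
  rewrite <- Series_scal_l. apply Series_ext. intros k.
  rewrite Rpower_plus.
  replace (2 * INR k) with (INR (2 * k)) by (rewrite mult_INR; reflexivity).
  rewrite Rpower_pow, pow_mult by lra.
  replace ((x / 2) ^ 2) with (x * x / 4) by field. unfold besselI_coef, Rdiv. ring.
Qed.

Lemma is_derive_Ih (n : nat) (x : R) : 0 < x ->
  is_derive (Ih n) x (Rpower (x / 2) (nu n) *
    (nu n / x * besselI_series n (x * x / 4) + x / 2 * dbesselI_series n (x * x / 4))).
Proof.
  intros Hx.
  apply is_derive_ext_loc with (fun t => Rpower (t / 2) (nu n) * besselI_series n (t * t / 4)).
  { exists (mkposreal x Hx). intros t Ht. apply Rabs_def2 in Ht.
    unfold minus, plus, opp in Ht; simpl in Ht. symmetry. apply Ih_eq. lra. }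
  auto_derive.
  { split; [apply ex_derive_Rpower; lra |].
    split; [eexists; apply is_derive_besselI_series | exact I]. }
  rewrite Derive_Rpower by lra. rewrite (is_derive_unique _ _ _ (is_derive_besselI_series n _)).
  replace (nu n - 1) with (nu n + - (1)) by ring.
  rewrite Rpower_plus, Rpower_Ropp, Rpower_1 by lra.
  unfold dbesselI_series, Rdiv. field. lra.
Qed.

Lemma besselI_series_bounds (n : nat) (y : R) : 0 <= y <= / 2 ->
  besselI_coef n O <= besselI_series n y /\
  0 <= dbesselI_series n y <= 2 * besselI_coef n O /\
  0 <= ddbesselI_series n y <= 2 * besselI_coef n O.
Proof.
  intros Hy. assert (Hc := besselI_coef_fact_dominated n).
  assert (Hc' := PS_derive_fact_dominated _ _ Hc).
  assert (Hc'' := PS_derive_fact_dominated _ _ Hc').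
  destruct (PSeries_fact_dominated _ _ y Hc Hy) as [Hex _].
  split; [apply PSeries_ge_coef0; auto; [intros k; apply Hc | lra] |].
  split; [apply (PSeries_fact_dominated _ _ y Hc' Hy) | apply (PSeries_fact_dominated _ _ y Hc'' Hy)].
Qed.

Lemma besselI_series_le_mono (n : nat) (y1 y2 : R) : 0 <= y1 <= y2 -> y2 <= / 2 ->
  besselI_series n y1 <= besselI_series n y2.
Proof.
  intros H1 H2. assert (Hc := besselI_coef_fact_dominated n).
  apply PSeries_le_mono; auto; [intros k; apply Hc |].
  apply (PSeries_fact_dominated _ _ y2 Hc). lra.
Qed.

Definition besselI_phi (n : nat) (y : R) : R := y * dbesselI_series n y / besselI_series n y.

(* The logarithmic derivative x I_nu'(x) / I_nu(x). *)
Definition besselI_logderiv (n : nat) (x : R) : R := nu n + 2 * besselI_phi n (x * x / 4).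

Lemma besselI_phi_bounds (n : nat) (y : R) : 0 <= y <= / 2 -> 0 <= besselI_phi n y <= 2 * y.
Proof.
  intros Hy. destruct (besselI_series_bounds n y Hy) as [Hg [Hd _]].
  generalize (besselI_coef_pos n O). intros Hc0. unfold besselI_phi. split.
  - apply Rmult_le_pos; [nra | left; apply Rinv_0_lt_compat; lra].
  - apply (Rmult_le_reg_r (besselI_series n y)); [lra |].
    unfold Rdiv. rewrite Rmult_assoc, Rinv_l by lra. nra.
Qed.

Lemma besselI_logderiv_bounds (n : nat) (x : R) : 0 <= x * x / 4 <= / 2 ->
  nu n <= besselI_logderiv n x <= nu n + 2.
Proof. intros H. generalize (besselI_phi_bounds n _ H). unfold besselI_logderiv. lra. Qed.

Lemma Ih_pos (n : nat) (x : R) : 0 < x -> x * x / 4 <= / 2 -> 0 < Ih n x.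
Proof.
  intros Hx Hy. rewrite Ih_eq by exact Hx. apply Rmult_lt_0_compat; [apply Rpower_pos |].
  destruct (besselI_series_bounds n (x * x / 4) ltac:(nra)) as [H _].
  generalize (besselI_coef_pos n O). lra.
Qed.

Lemma dIh_eq (n : nat) (x : R) : 0 < x -> x * x / 4 <= / 2 ->
  dIh n x = besselI_logderiv n x * Ih n x / x.
Proof.
  intros Hx Hy. unfold dIh. rewrite (is_derive_unique _ _ _ (is_derive_Ih n x Hx)), Ih_eq by exact Hx.
  unfold besselI_logderiv, besselI_phi.
  destruct (besselI_series_bounds n (x * x / 4) ltac:(nra)) as [H _].
  generalize (besselI_coef_pos n O). intros. field. lra.
Qed.

Lemma is_derive_besselI_phi (n : nat) (y : R) : 0 <= y <= / 2 ->
  is_derive (besselI_phi n) y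
    ((dbesselI_series n y + y * ddbesselI_series n y) / besselI_series n y
     - y * dbesselI_series n y * dbesselI_series n y / (besselI_series n y * besselI_series n y)).
Proof.
  intros Hy. destruct (besselI_series_bounds n y Hy) as [H1 _]. generalize (besselI_coef_pos n O). intros.
  unfold besselI_phi. auto_derive.
  - split; [eexists; apply is_derive_dbesselI_series |].
    split; [eexists; apply is_derive_besselI_series |]. split; auto. lra.
  - change (fun x => dbesselI_series n x) with (dbesselI_series n).
    change (fun x => besselI_series n x) with (besselI_series n).
    rewrite (is_derive_unique _ _ _ (is_derive_dbesselI_series n y)),
            (is_derive_unique _ _ _ (is_derive_besselI_series n y)).
    field. lra.
Qed.

Lemma besselI_phi_deriv_bound (n : nat) (y : R) : 0 <= y <= / 2 ->
  Rabs ((dbesselI_series n y + y * ddbesselI_series n y) / besselI_series n y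
     - y * dbesselI_series n y * dbesselI_series n y / (besselI_series n y * besselI_series n y)) <= 5.
Proof.
  intros Hy. destruct (besselI_series_bounds n y Hy) as [Hg [Hd Hdd]].
  generalize (besselI_coef_pos n O). intros Hc0.
  set (c0 := besselI_coef n O) in *. set (g := besselI_series n y) in *.
  set (d := dbesselI_series n y) in *. set (e := ddbesselI_series n y) in *.
  assert (A1 : 0 <= (d + y * e) / g <= 3).
  { split; [apply Rmult_le_pos; [nra | left; apply Rinv_0_lt_compat; lra] |].
    apply (Rmult_le_reg_r g); [lra |]. unfold Rdiv. rewrite Rmult_assoc, Rinv_l by lra. nra. }
  assert (A2 : 0 <= y * d * d / (g * g) <= 2).
  { split; [apply Rmult_le_pos; [apply Rmult_le_pos; nra | left; apply Rinv_0_lt_compat; nra] |].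
    apply (Rmult_le_reg_r (g * g)); [nra |]. unfold Rdiv. rewrite Rmult_assoc, Rinv_l by nra.
    assert (d * d <= 4 * (c0 * c0)) by nra. assert (c0 * c0 <= g * g) by nra. nra. }
  apply Rabs_le. lra.
Qed.

Lemma besselI_phi_lipschitz (n : nat) (y1 y2 : R) : 0 <= y1 <= / 2 -> 0 <= y2 <= / 2 ->
  Rabs (besselI_phi n y1 - besselI_phi n y2) <= 5 * Rabs (y1 - y2).
Proof.
  intros H1 H2.
  assert (Hbetween : forall c, Rmin y2 y1 <= c <= Rmax y2 y1 -> 0 <= c <= / 2).
  { intros c Hc. generalize (Rmin_l y2 y1) (Rmin_r y2 y1) (Rmax_l y2 y1) (Rmax_r y2 y1).
    destruct (Rle_dec y1 y2);
      [rewrite Rmin_right in Hc by lra; rewrite Rmax_left in Hc by lra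
      | rewrite Rmin_left in Hc by lra; rewrite Rmax_right in Hc by lra]; lra. }
  destruct (MVT_abs (besselI_phi n) (fun y => (dbesselI_series n y + y * ddbesselI_series n y) / besselI_series n y
     - y * dbesselI_series n y * dbesselI_series n y / (besselI_series n y * besselI_series n y)) y2 y1)
    as [c [Hc Hcr]].
  { intros c Hc. apply is_derive_Reals, is_derive_besselI_phi, Hbetween, Hc. }
  rewrite Hc. apply Rmult_le_compat_r; [apply Rabs_pos |].
  apply besselI_phi_deriv_bound, Hbetween, Hcr.
Qed.

Lemma Ih_le_Rpower (n : nat) (r : R) : 0 < r < 1 -> Ih n r <= Rpower r (nu n) * Ih n 1.
Proof.
  intros Hr. rewrite !Ih_eq by lra.
  replace (r / 2) with (r * / 2) by reflexivity. rewrite <- Rpower_mult_distr by lra.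
  replace (1 / 2) with (/ 2) by field. rewrite Rmult_assoc.
  apply Rmult_le_compat_l; [left; apply Rpower_pos |].
  apply Rmult_le_compat_l; [left; apply Rpower_pos |].
  apply besselI_series_le_mono; nra.
Qed.

(** * The modified Bessel function of the second kind *)

Lemma cosh_pos (t : R) : 0 < cosh t.
Proof. unfold cosh. generalize (exp_pos t) (exp_pos (- t)). lra. Qed.

Lemma cosh_le_exp (z : R) : 0 <= z -> cosh z <= exp z.
Proof.
  intros Hz. unfold cosh. assert (exp (- z) <= exp z) by (apply exp_le_compat; lra). lra.
Qed.

Lemma exp_convex (l A B : R) : 0 <= l <= 1 ->
  exp (l * A + (1 - l) * B) <= l * exp A + (1 - l) * exp B.
Proof.
  intros Hl. set (c := l * A + (1 - l) * B).
  assert (Htangent : forall z, exp c * (1 + (z - c)) <= exp z).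
  { intros z. replace (exp z) with (exp c * exp (z - c)) by (rewrite <- exp_plus; f_equal; ring).
    apply Rmult_le_compat_l; [left; apply exp_pos | apply exp_ineq1_le]. }
  generalize (Htangent A) (Htangent B).
  assert (l * (exp c * (1 + (A - c))) + (1 - l) * (exp c * (1 + (B - c))) = exp c) by (unfold c; ring).
  nra.
Qed.

Definition besselK_integrand (v x t : R) : R := exp (- x * cosh t) * cosh (v * t).

Lemma besselK_integrand_continuous (v x t : R) : continuous (besselK_integrand v x) t.
Proof.
  apply (ex_derive_continuous (besselK_integrand v x)). unfold besselK_integrand, cosh.
  auto_derive. auto.
Qed.

Lemma ex_RInt_besselK_integrand (v x a b : R) : ex_RInt (besselK_integrand v x) a b.
Proof.
  apply (ex_RInt_continuous (V := R_CompleteNormedModule)).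
  intros; apply besselK_integrand_continuous.
Qed.

Lemma besselK_integrand_pos (v x t : R) : 0 < besselK_integrand v x t.
Proof. apply Rmult_lt_0_compat; [apply exp_pos | apply cosh_pos]. Qed.

Lemma besselK_integrand_le (v x t : R) (m : nat) : 0 < x -> 0 <= v -> v + 1 <= INR m -> 0 <= t ->
  besselK_integrand v x t <= INR (fact m) / (x / 2) ^ m * exp (- t).
Proof.
  intros Hx Hv Hm Ht. unfold besselK_integrand.
  set (s := x / 2 * exp t).
  assert (Hs : 0 < s) by (unfold s; generalize (exp_pos t); nra).
  assert (H1 : exp (- x * cosh t) <= exp (- s)).
  { apply exp_le_compat. unfold s, cosh. generalize (exp_pos (- t)). nra. }
  assert (H2 := exp_neg_le_fact_div_pow s m Hs).
  assert (H3 : cosh (v * t) <= exp (v * t)) by (apply cosh_le_exp; nra).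
  assert (Hsm : s ^ m = (x / 2) ^ m * exp (INR m * t)).
  { unfold s. rewrite Rpow_mult_distr, exp_pow_INR. reflexivity. }
  generalize (pow_lt (x / 2) m ltac:(lra)) (INR_fact_lt_0 m) (exp_pos (INR m * t))
             (cosh_pos (v * t)) (exp_pos (- x * cosh t)).
  intros P1 P2 P3 P4 P5.
  assert (H4 : exp (- x * cosh t) * cosh (v * t) <= INR (fact m) / s ^ m * exp (v * t))
    by (apply Rmult_le_compat; lra).
  eapply Rle_trans; [exact H4 |]. rewrite Hsm.
  assert (H5 : exp (v * t) / exp (INR m * t) <= exp (- t)).
  { unfold Rdiv. rewrite <- exp_Ropp, <- exp_plus. apply exp_le_compat. nra. }
  replace (INR (fact m) / ((x / 2) ^ m * exp (INR m * t)) * exp (v * t)) with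
    (INR (fact m) / (x / 2) ^ m * (exp (v * t) / exp (INR m * t))) by (field; lra).
  apply Rmult_le_compat_l; [apply Rlt_le, Rdiv_lt_0_compat; lra | exact H5].
Qed.

Lemma is_RInt_exp_neg (C a b : R) :
  is_RInt (fun t => C * exp (- t)) a b (C * (exp (- a) - exp (- b))).
Proof.
  replace (C * (exp (- a) - exp (- b))) with
    ((fun t => - C * exp (- t)) b - (fun t => - C * exp (- t)) a) by (simpl; ring).
  apply (is_RInt_derive (fun t => - C * exp (- t))).
  - intros x _. auto_derive; auto. ring.
  - intros x _. apply (ex_derive_continuous (fun t => C * exp (- t))). auto_derive. auto.
Qed.

Lemma besselK_spec (v x : R) : 0 <= v -> 0 < x ->
  is_RInt_gen (besselK_integrand v x) (at_point 0) (Rbar_locally p_infty) (besselK v x) /\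
  0 < besselK v x.
Proof.
  intros Hv Hx. destruct (INR_unbounded (v + 1)) as [m Hm].
  set (C := INR (fact m) / (x / 2) ^ m).
  assert (HC : 0 < C) by (apply Rdiv_lt_0_compat; [apply INR_fact_lt_0 | apply pow_lt; lra]).
  destruct (is_RInt_gen_bounded_monotone (Fa := at_point 0) (Fb := Rbar_locally p_infty)
              (besselK_integrand v x) (RInt (besselK_integrand v x)) (fun a => a = 0) (fun b => 1 < b) C)
    as [L [HL HleL]].
  - reflexivity.
  - apply p_infty_gt.
  - intros a b Ha Hb. apply (RInt_correct (V := R_CompleteNormedModule)), ex_RInt_besselK_integrand.
  - intros a b -> Hb. eapply Rle_trans.
    + apply (RInt_le _ (fun t => C * exp (- t))); [lra | apply ex_RInt_besselK_integrand | |].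
      * eexists; apply is_RInt_exp_neg.
      * intros t Ht. apply besselK_integrand_le; lra.
    + rewrite (is_RInt_unique _ _ _ _ (is_RInt_exp_neg C 0 b)), Ropp_0, exp_0.
      generalize (exp_pos (- b)). nra.
  - intros a0 b0 -> Hb0. exists (fun a => a = 0), (fun b => b0 < b).
    split; [reflexivity |]. split; [apply p_infty_gt |].
    intros a b -> Hb.
    rewrite <- (RInt_Chasles (besselK_integrand v x) 0 b0 b) by apply ex_RInt_besselK_integrand.
    unfold plus; simpl.
    assert (0 <= RInt (besselK_integrand v x) b0 b); [| lra].
    apply RInt_ge_0; [lra | apply ex_RInt_besselK_integrand | intros; left; apply besselK_integrand_pos].
  - replace (besselK v x) with L by (symmetry; apply (is_RInt_gen_unique (besselK_integrand v x)), HL).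
    split; [exact HL |].
    eapply Rlt_le_trans; [| apply (HleL 0 2); lra].
    apply RInt_gt_0; [lra | intros; apply besselK_integrand_pos | intros; apply besselK_integrand_continuous].
Qed.

Lemma besselK_decreasing (v x y : R) : 0 <= v -> 0 < x -> x < y -> besselK v y <= besselK v x.
Proof.
  intros Hv Hx Hxy.
  generalize (is_RInt_gen_minus _ _ _ _ (proj1 (besselK_spec v x Hv Hx))
                                        (proj1 (besselK_spec v y Hv ltac:(lra)))).
  intros H. apply is_RInt_gen_ge_0 in H.
  - unfold minus, plus, opp in H; simpl in H. lra.
  - intros t _. unfold minus, plus, opp; simpl. unfold besselK_integrand.
    assert (exp (- y * cosh t) <= exp (- x * cosh t)) by (apply exp_le_compat; generalize (cosh_pos t); nra).
    generalize (cosh_pos (v * t)). nra.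
Qed.

(* Convexity of x |-> exp (- x c) for every c, integrated against cosh (v t). *)
Lemma besselK_convex (v u1 u2 u3 : R) : 0 <= v -> 0 < u1 -> u1 < u2 -> u2 < u3 ->
  (u3 - u1) * besselK v u2 <= (u3 - u2) * besselK v u1 + (u2 - u1) * besselK v u3.
Proof.
  intros Hv H1 H2 H3.
  destruct (besselK_spec v u1 Hv ltac:(lra)) as [K1 _].
  destruct (besselK_spec v u2 Hv ltac:(lra)) as [K2 _].
  destruct (besselK_spec v u3 Hv ltac:(lra)) as [K3 _].
  generalize (is_RInt_gen_minus _ _ _ _
     (is_RInt_gen_plus _ _ _ _ (is_RInt_gen_scal _ (u3 - u2) _ K1) (is_RInt_gen_scal _ (u2 - u1) _ K3))
     (is_RInt_gen_scal _ (u3 - u1) _ K2)).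
  intros H. apply is_RInt_gen_ge_0 in H.
  - unfold minus, plus, opp, scal in H; simpl in H; unfold mult in H; simpl in H. lra.
  - intros t _. unfold minus, plus, opp, scal; simpl; unfold mult; simpl. unfold besselK_integrand.
    set (c := cosh t). assert (Hc : 0 < c) by apply cosh_pos.
    set (l := (u3 - u2) / (u3 - u1)).
    assert (Hl : 0 <= l <= 1).
    { unfold l. split; [apply Rmult_le_pos; [lra | left; apply Rinv_0_lt_compat; lra] |].
      apply (Rmult_le_reg_r (u3 - u1)); [lra |]. unfold Rdiv. rewrite Rmult_assoc, Rinv_l by lra. lra. }
    generalize (exp_convex l (- u1 * c) (- u3 * c) Hl). intros E.
    replace (l * (- u1 * c) + (1 - l) * (- u3 * c)) with (- u2 * c) in E by (unfold l; field; lra).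
    assert (E2 : (u3 - u1) * exp (- u2 * c) <= (u3 - u2) * exp (- u1 * c) + (u2 - u1) * exp (- u3 * c)).
    { replace ((u3 - u2) * exp (- u1 * c) + (u2 - u1) * exp (- u3 * c)) with
        ((u3 - u1) * (l * exp (- u1 * c) + (1 - l) * exp (- u3 * c))) by (unfold l; field; lra).
      apply Rmult_le_compat_l; lra. }
    generalize (cosh_pos (v * t)). nra.
Qed.

(** * Derivatives of convex decreasing functions *)

Section ConvexDerivative.

Variable k : R -> R.
Hypothesis k_decreasing : forall x y, 0 < x -> x < y -> k y <= k x.
Hypothesis k_convex : forall u1 u2 u3, 0 < u1 -> u1 < u2 -> u2 < u3 ->
  (u3 - u1) * k u2 <= (u3 - u2) * k u1 + (u2 - u1) * k u3.

Definition slope (x h : R) : R := (k (x + h) - k x) / h.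

Lemma slope_le_mono (x h1 h2 : R) : 0 < x -> 0 < h1 <= h2 -> slope x h1 <= slope x h2.
Proof.
  intros Hx [H1 [H2 | <-]]; [| lra].
  generalize (k_convex x (x + h1) (x + h2) Hx ltac:(lra) ltac:(lra)). intros C.
  replace (x + h2 - x) with h2 in C by ring. replace (x + h2 - (x + h1)) with (h2 - h1) in C by ring.
  replace (x + h1 - x) with h1 in C by ring.
  unfold slope, Rdiv. apply (Rmult_le_reg_r (h1 * h2)); [nra |].
  replace ((k (x + h1) - k x) * / h1 * (h1 * h2)) with ((k (x + h1) - k x) * h2) by (field; lra).
  replace ((k (x + h2) - k x) * / h2 * (h1 * h2)) with ((k (x + h2) - k x) * h1) by (field; lra).
  nra.
Qed.

Lemma chord_le_slope (x r h : R) : 0 < r -> r < x -> 0 < h -> (k x - k r) / (x - r) <= slope x h.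
Proof.
  intros Hr Hrx Hh. generalize (k_convex r x (x + h) Hr Hrx ltac:(lra)). intros C.
  unfold slope, Rdiv. apply (Rmult_le_reg_r ((x - r) * h)); [nra |].
  replace ((k x - k r) * / (x - r) * ((x - r) * h)) with ((k x - k r) * h) by (field; lra).
  replace ((k (x + h) - k x) * / h * ((x - r) * h)) with ((k (x + h) - k x) * (x - r)) by (field; lra).
  nra.
Qed.

Lemma inv_INR_S_pos (n : nat) : 0 < / (INR n + 1).
Proof. apply Rinv_0_lt_compat. generalize (pos_INR n). lra. Qed.

(* The right difference quotients along h = 1/(n+1) decrease and are bounded
   below by any chord on the left, so they converge; the limit is Derive k x. *)
Lemma is_lim_seq_slope_Derive (x : R) : 0 < x ->
  is_lim_seq (fun n => slope x (/ (INR n + 1))) (Derive k x).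
Proof.
  intros Hx.
  assert (Hdecr : forall n, slope x (/ (INR (S n) + 1)) <= slope x (/ (INR n + 1))).
  { intros n. apply slope_le_mono; [exact Hx |]. split; [apply inv_INR_S_pos |].
    apply Rinv_le_contravar; [generalize (pos_INR n); lra | rewrite S_INR; lra]. }
  assert (Hex : ex_finite_lim_seq (fun n => slope x (/ (INR n + 1)))).
  { apply (ex_finite_lim_seq_decr _ ((k x - k (x / 2)) / (x - x / 2))); [exact Hdecr |].
    intros n. apply chord_le_slope; [lra | lra | apply inv_INR_S_pos]. }
  assert (E : Lim (fun h => (k (x + h) - k x) / h) 0 = Lim_seq (fun n => slope x (/ (INR n + 1)))).
  { unfold Lim. apply Lim_seq_ext. intros n. unfold slope. simpl. rewrite Rplus_0_l. reflexivity. }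
  unfold Derive. rewrite E.
  apply ex_finite_lim_seq_correct in Hex. destruct Hex as [Hex Hfin].
  apply Lim_seq_correct'. apply ex_finite_lim_seq_correct. split; auto.
Qed.

Lemma Derive_le_slope (x h : R) : 0 < x -> 0 < h -> Derive k x <= slope x h.
Proof.
  intros Hx Hh. destruct (archimed_cor1 h Hh) as [N [HN1 HN2]].
  assert (HNh : / (INR N + 1) <= h).
  { assert (0 < INR N) by (apply lt_0_INR; lia).
    left. eapply Rle_lt_trans; [| exact HN1]. apply Rinv_le_contravar; lra. }
  apply Rle_trans with (slope x (/ (INR N + 1)));
    [| apply slope_le_mono; [exact Hx | split; [apply inv_INR_S_pos | exact HNh]]].
  apply (is_lim_seq_decr_compare (fun n => slope x (/ (INR n + 1)))); [apply is_lim_seq_slope_Derive, Hx |].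
  intros n. apply slope_le_mono; [exact Hx |]. split; [apply inv_INR_S_pos |].
  apply Rinv_le_contravar; [generalize (pos_INR n); lra | rewrite S_INR; lra].
Qed.

Lemma chord_le_Derive (r x : R) : 0 < r -> r < x -> (k x - k r) / (x - r) <= Derive k x.
Proof.
  intros Hr Hrx.
  change (Rbar_le ((k x - k r) / (x - r)) (Derive k x)).
  apply (is_lim_seq_le (fun _ => (k x - k r) / (x - r)) (fun n => slope x (/ (INR n + 1))));
    [| apply is_lim_seq_const | apply is_lim_seq_slope_Derive; lra].
  intros n. apply chord_le_slope; [exact Hr | exact Hrx | apply inv_INR_S_pos].
Qed.

Lemma Derive_le_0 (x : R) : 0 < x -> Derive k x <= 0.
Proof.
  intros Hx. eapply Rle_trans; [apply (Derive_le_slope x 1 Hx); lra |].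
  unfold slope. generalize (k_decreasing x (x + 1) Hx ltac:(lra)). intros.
  unfold Rdiv. rewrite Rinv_1. lra.
Qed.

Lemma Derive_le_mono (r s : R) : 0 < r -> r < s -> Derive k r <= Derive k s.
Proof.
  intros Hr Hrs. apply Rle_trans with ((k s - k r) / (s - r)).
  - eapply Rle_trans; [apply (Derive_le_slope r (s - r)); lra |].
    unfold slope. replace (r + (s - r)) with s by ring. lra.
  - apply chord_le_Derive; assumption.
Qed.

End ConvexDerivative.

Lemma Kh_pos (n : nat) (x : R) : 0 < x -> 0 < Kh n x.
Proof. intros Hx. apply besselK_spec; [generalize (nu_ge_half n); unfold nu; lra | exact Hx]. Qed.

Lemma Kh_decreasing (n : nat) (x y : R) : 0 < x -> x < y -> Kh n y <= Kh n x.
Proof. apply besselK_decreasing. generalize (nu_ge_half n). unfold nu. lra. Qed.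

Lemma Kh_convex (n : nat) (u1 u2 u3 : R) : 0 < u1 -> u1 < u2 -> u2 < u3 ->
  (u3 - u1) * Kh n u2 <= (u3 - u2) * Kh n u1 + (u2 - u1) * Kh n u3.
Proof. apply besselK_convex. generalize (nu_ge_half n). unfold nu. lra. Qed.

Lemma dKh_le_0 (n : nat) (x : R) : 0 < x -> dKh n x <= 0.
Proof. apply (Derive_le_0 (Kh n) (Kh_decreasing n) (Kh_convex n)). Qed.

Lemma dKh_le_mono (n : nat) (r s : R) : 0 < r -> r < s -> dKh n r <= dKh n s.
Proof. apply (Derive_le_mono (Kh n) (Kh_convex n)). Qed.

(** * Estimates for the eigenvalues *)

Lemma eigenvalue_gap_le (u v I1 h1 nv X Y : R) :
  0 < I1 -> 0 < nv <= h1 -> Rabs u <= X * I1 -> Rabs v <= Y * I1 -> Y <= nv / 2 ->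
  2 * nv * Rabs ((u - I1) / (v - h1 * I1) - I1 / (h1 * I1)) <= 4 * X + 4 * Y / nv.
Proof.
  intros HI Hh Hu Hv HY.
  generalize (Rabs_pos u) (Rabs_pos v) (Rle_abs v) (Rle_abs (- v)). rewrite Rabs_Ropp.
  intros Hu0 Hv0 Hv1 Hv2.
  assert (HX : 0 <= X) by (apply (Rmult_le_reg_r I1); lra).
  assert (Hden : h1 * I1 / 2 <= h1 * I1 - v) by nra.
  assert (Hh1 : h1 <> 0) by lra. assert (Hnv : nv <> 0) by lra. assert (HI1 : I1 <> 0) by lra.
  assert (Hd : h1 * I1 - v <> 0) by nra. assert (Hd' : v - h1 * I1 <> 0) by nra.
  assert (Hgap : (u - I1) / (v - h1 * I1) - I1 / (h1 * I1) = (v - h1 * u) / (h1 * (h1 * I1 - v)))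
    by (field; auto).
  assert (Hnum : Rabs (v - h1 * u) <= Y * I1 + h1 * (X * I1)).
  { unfold Rminus. eapply Rle_trans; [apply Rabs_triang |].
    rewrite Rabs_Ropp, Rabs_mult, (Rabs_pos_eq h1) by lra. nra. }
  rewrite Hgap, Rabs_div by (apply Rmult_integral_contrapositive_currified; nra).
  rewrite Rabs_mult, (Rabs_pos_eq h1), (Rabs_pos_eq (h1 * I1 - v)) by nra.
  apply (Rmult_le_reg_r (h1 * (h1 * I1 - v) * nv)); [apply Rmult_lt_0_compat; nra |].
  replace (2 * nv * (Rabs (v - h1 * u) / (h1 * (h1 * I1 - v))) * (h1 * (h1 * I1 - v) * nv))
    with (2 * nv * nv * Rabs (v - h1 * u)) by (field; auto).
  replace ((4 * X + 4 * Y / nv) * (h1 * (h1 * I1 - v) * nv))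
    with (4 * (X * nv + Y) * (h1 * (h1 * I1 - v))) by (field; auto).
  assert (2 * nv * nv * (Y * I1 + h1 * (X * I1)) <= 4 * (X * nv + Y) * (h1 * (h1 * I1 / 2))).
  { replace (4 * (X * nv + Y) * (h1 * (h1 * I1 / 2))) with (2 * h1 * h1 * (X * nv * I1 + Y * I1)) by field.
    assert (HYI : 0 <= Y * I1) by lra. assert (HXI : 0 <= X * I1) by nra.
    assert (nv * nv * (Y * I1) <= h1 * h1 * (Y * I1)) by (apply Rmult_le_compat_r; nra).
    assert (nv * h1 * (X * I1) * nv <= nv * h1 * (X * I1) * h1)
      by (apply Rmult_le_compat_l; [repeat apply Rmult_le_pos |]; lra).
    nra. }
  assert (2 * nv * nv * Rabs (v - h1 * u) <= 2 * nv * nv * (Y * I1 + h1 * (X * I1)))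
    by (apply Rmult_le_compat_l; nra).
  assert (4 * (X * nv + Y) * (h1 * (h1 * I1 / 2)) <= 4 * (X * nv + Y) * (h1 * (h1 * I1 - v)))
    by (apply Rmult_le_compat_l; [nra | apply Rmult_le_compat_l; lra]).
  lra.
Qed.

Lemma rho_ratio_bounds (N A B Kr dKr K1 dK1 : R) :
  0 < A -> 0 < B -> 0 < K1 <= Kr -> dKr <= dK1 <= 0 ->
  Rabs (N / (A * Kr - B * dKr) * K1) <= Rabs N / A /\
  Rabs (N / (A * Kr - B * dKr) * dK1) <= Rabs N / B /\
  Rabs (N / (A * Kr - B * dKr) * dK1) <= Rabs N / A * (- dK1 / K1).
Proof.
  intros HA HB HK HdK.
  set (D := A * Kr - B * dKr).
  assert (HD1 : A * K1 <= D) by (unfold D; nra).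
  assert (HD2 : B * (- dK1) <= D) by (unfold D; nra).
  assert (HD : 0 < D) by nra.
  generalize (Rabs_pos N). intros HN.
  rewrite !Rabs_mult, Rabs_div, (Rabs_pos_eq D), (Rabs_pos_eq K1), (Rabs_left1 dK1) by lra.
  unfold Rdiv. repeat split.
  - rewrite Rmult_assoc. apply Rmult_le_compat_l; [exact HN |].
    apply (Rmult_le_reg_r (D * A)); [nra |].
    replace (/ D * K1 * (D * A)) with (A * K1) by (field; lra).
    replace (/ A * (D * A)) with D by (field; lra). exact HD1.
  - rewrite Rmult_assoc. apply Rmult_le_compat_l; [exact HN |].
    apply (Rmult_le_reg_r (D * B)); [nra |].
    replace (/ D * - dK1 * (D * B)) with (B * - dK1) by (field; lra).
    replace (/ B * (D * B)) with D by (field; lra). exact HD2.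
  - rewrite !Rmult_assoc. apply Rmult_le_compat_l; [exact HN |].
    apply (Rmult_le_reg_r (D * A * K1)); [repeat apply Rmult_lt_0_compat; lra |].
    replace (/ D * - dK1 * (D * A * K1)) with (- dK1 * (A * K1)) by (field; lra).
    replace (/ A * (- dK1 * / K1) * (D * A * K1)) with (- dK1 * D) by (field; lra).
    apply Rmult_le_compat_l; lra.
Qed.

Definition shell_mismatch (n : nat) (s r : R) : R :=
  sqrt s ^ 3 * besselI_logderiv n (r / sqrt s) - besselI_logderiv n r.

Definition Kh_ratio (n : nat) : R := - dKh n 1 / Kh n 1.

Lemma Kh_ratio_ge_0 (n : nat) : 0 <= Kh_ratio n.
Proof.
  generalize (dKh_le_0 n 1 ltac:(lra)) (Kh_pos n 1 ltac:(lra)). intros.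
  apply Rmult_le_pos; [lra | left; apply Rinv_0_lt_compat; lra].
Qed.

Lemma shell_scaled_sq_le (s r : R) : 0 < s -> 0 < r < 1 -> r * r <= 2 * s ->
  0 <= r / sqrt s * (r / sqrt s) / 4 <= / 2.
Proof.
  intros Hs Hr Hrs. assert (Ht : 0 < sqrt s) by (apply sqrt_lt_R0, Hs).
  assert (Htt : sqrt s * sqrt s = s) by (apply sqrt_sqrt; lra).
  set (t := sqrt s) in *.
  replace (r / t * (r / t) / 4) with (r * r / (4 * s)) by (rewrite <- Htt; field; lra).
  split; [apply Rmult_le_pos; [nra | left; apply Rinv_0_lt_compat; lra] |].
  apply (Rmult_le_reg_r (4 * s)); [lra |]. unfold Rdiv. rewrite Rmult_assoc, Rinv_l by lra. lra.
Qed.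

Lemma scaled_dIh_eq (n : nat) (s r : R) : 0 < s -> 0 < r < 1 -> r * r <= 2 * s ->
  s * dIh n (r / sqrt s) = sqrt s ^ 3 * besselI_logderiv n (r / sqrt s) * Ih n (r / sqrt s) / r.
Proof.
  intros Hs Hr Hrs. assert (Hya := shell_scaled_sq_le s r Hs Hr Hrs).
  assert (Ht : 0 < sqrt s) by (apply sqrt_lt_R0, Hs).
  assert (Htt : sqrt s * sqrt s = s) by (apply sqrt_sqrt; lra).
  rewrite dIh_eq by (try apply Rdiv_lt_0_compat; lra).
  set (t := sqrt s) in *. rewrite <- Htt. field. lra.
Qed.

Lemma rho_numerator_eq (n : nat) (s r : R) : 0 < s -> 0 < r < 1 -> r * r <= 2 * s ->
  s * dIh n (r / sqrt s) * Ih n r - Ih n (r / sqrt s) * dIh n r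
  = Ih n (r / sqrt s) * Ih n r * shell_mismatch n s r / r.
Proof.
  intros Hs Hr Hrs.
  rewrite scaled_dIh_eq, (dIh_eq n r) by (auto; nra). unfold shell_mismatch. field. lra.
Qed.

Lemma rho_K_bounds (n : nat) (s r : R) : 0 < s -> 0 < r < 1 -> r * r <= 2 * s ->
  let B := Rpower r (nu n) * Ih n 1 * Rabs (shell_mismatch n s r) in
  Rabs (rho s r n * Kh n 1) <= B / (sqrt s ^ 3 * nu n) /\
  Rabs (rho s r n * dKh n 1) <= B / r /\
  Rabs (rho s r n * dKh n 1) <= B / (sqrt s ^ 3 * nu n) * Kh_ratio n.
Proof.
  intros Hs Hr Hrs B.
  assert (HN := rho_numerator_eq n s r Hs Hr Hrs). assert (HdIa := scaled_dIh_eq n s r Hs Hr Hrs).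
  assert (Hya := shell_scaled_sq_le s r Hs Hr Hrs).
  assert (HT : 0 < sqrt s ^ 3) by (apply pow_lt, sqrt_lt_R0, Hs).
  unfold rho. set (t := sqrt s) in *. set (a := r / t) in *. set (E := shell_mismatch n s r) in *.
  assert (Ha : 0 < a) by (apply Rdiv_lt_0_compat; [| apply sqrt_lt_R0]; lra).
  assert (HIa := Ih_pos n a Ha ltac:(lra)). assert (HIr := Ih_pos n r ltac:(lra) ltac:(nra)).
  assert (Hha := besselI_logderiv_bounds n a Hya).
  assert (Hnu := nu_ge_half n).
  assert (HIr1 : Ih n r <= Rpower r (nu n) * Ih n 1) by (apply Ih_le_Rpower, Hr).
  assert (HE0 := Rabs_pos E).
  assert (HNabs : Rabs (Ih n a * Ih n r * E / r) = Ih n a * Ih n r * Rabs E / r).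
  { unfold Rdiv. rewrite !Rabs_mult, Rabs_inv, (Rabs_pos_eq (Ih n a)), (Rabs_pos_eq (Ih n r)), (Rabs_pos_eq r) by lra.
    reflexivity. }
  destruct (rho_ratio_bounds (s * dIh n a * Ih n r - Ih n a * dIh n r) (s * dIh n a) (Ih n a)
              (Kh n r) (dKh n r) (Kh n 1) (dKh n 1)) as [B1 [B2 B3]].
  - rewrite HdIa. apply Rdiv_lt_0_compat; [apply Rmult_lt_0_compat; [apply Rmult_lt_0_compat |] |]; lra.
  - exact HIa.
  - split; [apply Kh_pos | apply Kh_decreasing]; lra.
  - split; [apply dKh_le_mono | apply dKh_le_0]; lra.
  - rewrite HN, HNabs, HdIa in *.
    assert (Hu : Ih n a * Ih n r * Rabs E / r / (t ^ 3 * besselI_logderiv n a * Ih n a / r)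
                 <= B / (t ^ 3 * nu n)).
    { replace (Ih n a * Ih n r * Rabs E / r / (t ^ 3 * besselI_logderiv n a * Ih n a / r))
        with (Ih n r * Rabs E / (t ^ 3 * besselI_logderiv n a)) by (field; repeat split; nra).
      unfold B, Rdiv. apply Rmult_le_compat; [nra | left; apply Rinv_0_lt_compat; nra | nra |].
      apply Rinv_le_contravar; [nra | apply Rmult_le_compat_l; lra]. }
    assert (Hv : Ih n a * Ih n r * Rabs E / r / Ih n a <= B / r).
    { replace (Ih n a * Ih n r * Rabs E / r / Ih n a) with (Ih n r * Rabs E / r) by (field; lra).
      unfold B, Rdiv. apply Rmult_le_compat_r; [left; apply Rinv_0_lt_compat; lra | nra]. }
    fold (Kh_ratio n) in B3. generalize (Kh_ratio_ge_0 n). intros HQ.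
    split; [| split]; [lra | lra |].
    eapply Rle_trans; [exact B3 |]. apply Rmult_le_compat_r; assumption.
Qed.

Lemma lam_gap_le (n : nat) (s r X Z : R) : 0 < s -> 0 < r < 1 -> r * r <= 2 * s ->
  let B := Rpower r (nu n) * Rabs (shell_mismatch n s r) in
  B <= X * (sqrt s ^ 3 * nu n) ->
  B <= Z * nu n * r \/ B * Kh_ratio n <= Z * nu n * (sqrt s ^ 3 * nu n) ->
  Z <= / 2 ->
  2 * nu n * Rabs (lam_cs s r n - lam_hom n) <= 4 * X + 4 * Z.
Proof.
  intros Hs Hr Hrs B HX HZ HZ2.
  destruct (rho_K_bounds n s r Hs Hr Hrs) as [Bu [Bv Bv']].
  assert (HI1 : 0 < Ih n 1) by (apply Ih_pos; lra).
  assert (Hh1 := besselI_logderiv_bounds n 1 ltac:(lra)).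
  assert (Hnu := nu_ge_half n).
  assert (HT : 0 < sqrt s ^ 3 * nu n) by (apply Rmult_lt_0_compat; [apply pow_lt, sqrt_lt_R0 |]; lra).
  assert (Hscale : forall D, 0 < D -> Rpower r (nu n) * Ih n 1 * Rabs (shell_mismatch n s r) / D = B / D * Ih n 1)
    by (intros D HD; unfold B; field; lra).
  replace (4 * X + 4 * Z) with (4 * X + 4 * (Z * nu n) / nu n) by (field; lra).
  unfold lam_cs, lam_hom. rewrite dIh_eq by lra. rewrite Rdiv_1_r.
  apply eigenvalue_gap_le; [exact HI1 | lra | | | nra].
  - eapply Rle_trans; [exact Bu |]. rewrite Hscale by exact HT.
    apply Rmult_le_compat_r; [lra | apply Rdiv_le_of_le_mul; assumption].
  - destruct HZ as [HZ | HZ].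
    + eapply Rle_trans; [exact Bv |]. rewrite Hscale by lra.
      apply Rmult_le_compat_r; [lra | apply Rdiv_le_of_le_mul; [lra | exact HZ]].
    + eapply Rle_trans; [exact Bv' |]. rewrite Hscale by exact HT.
      replace (B / (sqrt s ^ 3 * nu n) * Ih n 1 * Kh_ratio n)
        with (B * Kh_ratio n / (sqrt s ^ 3 * nu n) * Ih n 1) by (unfold Rdiv; ring).
      apply Rmult_le_compat_r; [lra | apply Rdiv_le_of_le_mul; assumption].
Qed.

Lemma shell_mismatch_le (n : nat) (s r : R) : 0 < s -> 0 < r < 1 -> r * r <= 2 * s ->
  Rabs (shell_mismatch n s r) <= (sqrt s ^ 3 + 1) * (nu n + 2).
Proof.
  intros Hs Hr Hrs. unfold shell_mismatch.
  assert (HT : 0 < sqrt s ^ 3) by (apply pow_lt, sqrt_lt_R0, Hs).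
  generalize (besselI_logderiv_bounds n _ (shell_scaled_sq_le s r Hs Hr Hrs))
             (besselI_logderiv_bounds n r ltac:(nra)) (nu_ge_half n).
  intros Ha Hr' Hnu. apply Rabs_le. split; nra.
Qed.

Lemma sqrt_cube_near_1 (s : R) : Rabs (s - 1) < / 2 -> Rabs (sqrt s ^ 3 - 1) <= 3 * Rabs (s - 1).
Proof.
  intros He. set (e := Rabs (s - 1)) in *. generalize (Rabs_pos (s - 1)). fold e. intros He0.
  assert (Hs : / 2 < s < 3 / 2) by (unfold e in He; apply Rabs_def2 in He; lra).
  assert (Ht : 0 < sqrt s) by (apply sqrt_lt_R0; lra).
  assert (Htt : sqrt s * sqrt s = s) by (apply sqrt_sqrt; lra).
  set (t := sqrt s) in *.
  assert (Ht1 : t < 5 / 4) by nra.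
  assert (Hd : Rabs (t - 1) <= e).
  { replace (t - 1) with ((s - 1) / (t + 1)) by (rewrite <- Htt; field; lra).
    unfold Rdiv. rewrite Rabs_mult, Rabs_inv, (Rabs_pos_eq (t + 1)) by lra. fold e.
    apply (Rmult_le_reg_r (t + 1)); [lra |]. rewrite Rmult_assoc, Rinv_l by lra. nra. }
  replace (t ^ 3 - 1) with ((s - 1) * t + (t - 1)) by (rewrite <- Htt; ring).
  eapply Rle_trans; [apply Rabs_triang |]. rewrite Rabs_mult, (Rabs_pos_eq t) by lra. fold e. nra.
Qed.

Lemma shell_mismatch_near_1 (n : nat) (s r : R) : 0 < r < 1 -> Rabs (s - 1) < / 2 ->
  Rabs (shell_mismatch n s r) <= 25 * Rabs (s - 1) * nu n.
Proof.
  intros Hr He. assert (HT := sqrt_cube_near_1 s He).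
  set (e := Rabs (s - 1)) in *. generalize (Rabs_pos (s - 1)). fold e. intros He0.
  assert (Hs : / 2 < s < 3 / 2) by (unfold e in He; apply Rabs_def2 in He; lra).
  assert (Hrs : r * r <= 2 * s) by nra.
  assert (Hya := shell_scaled_sq_le s r ltac:(lra) Hr Hrs).
  assert (Hyr : 0 <= r * r / 4 <= / 2) by nra.
  assert (Ht : 0 < sqrt s) by (apply sqrt_lt_R0; lra).
  assert (Htt : sqrt s * sqrt s = s) by (apply sqrt_sqrt; lra).
  unfold shell_mismatch. set (t := sqrt s) in *. set (a := r / t) in *.
  assert (Hdy : Rabs (a * a / 4 - r * r / 4) <= e / 2).
  { replace (a * a / 4 - r * r / 4) with (r * r / 4 * (- (s - 1) / s))
      by (unfold a; rewrite <- Htt; field; lra).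
    rewrite Rabs_mult, (Rabs_pos_eq (r * r / 4)) by nra.
    unfold Rdiv at 2. rewrite Rabs_mult, Rabs_inv, Rabs_Ropp, (Rabs_pos_eq s) by lra. fold e.
    apply (Rmult_le_reg_r s); [lra |]. rewrite !Rmult_assoc, Rinv_l, Rmult_1_r by lra. nra. }
  assert (Hdh : Rabs (besselI_logderiv n a - besselI_logderiv n r) <= 5 * e).
  { unfold besselI_logderiv.
    replace (nu n + 2 * besselI_phi n (a * a / 4) - (nu n + 2 * besselI_phi n (r * r / 4)))
      with (2 * (besselI_phi n (a * a / 4) - besselI_phi n (r * r / 4))) by ring.
    rewrite Rabs_mult, Rabs_pos_eq by lra.
    generalize (besselI_phi_lipschitz n _ _ Hya Hyr). lra. }
  assert (Hha := besselI_logderiv_bounds n _ Hya).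
  assert (Hnu := nu_ge_half n).
  replace (t ^ 3 * besselI_logderiv n a - besselI_logderiv n r)
    with ((t ^ 3 - 1) * besselI_logderiv n a + (besselI_logderiv n a - besselI_logderiv n r)) by ring.
  eapply Rle_trans; [apply Rabs_triang |].
  rewrite Rabs_mult, (Rabs_pos_eq (besselI_logderiv n a)) by lra.
  assert (Rabs (t ^ 3 - 1) * besselI_logderiv n a <= 3 * e * (nu n + 2))
    by (apply Rmult_le_compat; [apply Rabs_pos | lra | lra | lra]).
  nra.
Qed.

Lemma Rpower_nu_le_sqrt (n : nat) (r : R) : 0 < r < 1 -> Rpower r (nu n) <= sqrt r.
Proof.
  intros Hr. rewrite <- Rpower_sqrt by lra. apply Rpower_le_antimono; [exact Hr | apply nu_ge_half].
Qed.

Lemma Rpower_nu_le_mul_sqrt (n : nat) (r : R) : 0 < r < 1 -> (1 <= n)%nat -> Rpower r (nu n) <= r * sqrt r.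
Proof.
  intros Hr Hn. replace (r * sqrt r) with (Rpower r (1 + / 2))
    by (rewrite Rpower_plus, Rpower_1, Rpower_sqrt by lra; reflexivity).
  apply Rpower_le_antimono; [exact Hr |].
  unfold nu. apply le_INR in Hn. simpl in Hn. lra.
Qed.

(** * The operator norm of a diagonal operator *)

Lemma Cmod_multiplier_diff (a b : R) (z : C) :
  Cmod (Cminus (Cmult (RtoC a) z) (Cmult (RtoC b) z)) = Rabs (a - b) * Cmod z.
Proof.
  replace (Cminus (Cmult (RtoC a) z) (Cmult (RtoC b) z)) with (Cmult (RtoC (a - b)) z).
  - rewrite Cmod_mult, Cmod_R. reflexivity.
  - destruct z as [x y]. unfold Cminus, Cmult, Cplus, Copp, RtoC; simpl. f_equal; ring.
Qed.

Lemma hs_term_ge_0 (s : R) (c : sph_coeffs) (n : nat) : 0 <= hs_term s c n.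
Proof.
  apply Rmult_le_pos; [left; apply Rpower_pos |].
  apply cond_pos_sum. intros. apply pow2_ge_0.
Qed.

Lemma sobolev_weight_le (n : nat) : 1 + INR n * (INR n + 1) <= (2 * nu n) ^ 2.
Proof. unfold nu. generalize (pos_INR n). nra. Qed.

Lemma hs_term_multiplier_diff_le (lam1 lam2 : nat -> R) (eps : R) (c : sph_coeffs) (n : nat) :
  2 * nu n * Rabs (lam1 n - lam2 n) <= eps ->
  hs_term (/ 2) (fun n j => Cminus (multiplier lam1 c n j) (multiplier lam2 c n j)) n
    <= eps ^ 2 * hs_term (- / 2) c n.
Proof.
  intros Hgap. unfold hs_term, multiplier.
  set (W := 1 + INR n * (INR n + 1)).
  assert (HW : 0 < W) by (unfold W; generalize (pos_INR n); nra).
  set (S := sum_f_R0 (fun j => Cmod (c n j) ^ 2) (2 * n)).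
  assert (HS : 0 <= S) by (apply cond_pos_sum; intros; apply pow2_ge_0).
  assert (Hsum : sum_f_R0 (fun j => Cmod (Cminus (Cmult (RtoC (lam1 n)) (c n j))
                                                  (Cmult (RtoC (lam2 n)) (c n j))) ^ 2) (2 * n)
                 = (lam1 n - lam2 n) ^ 2 * S).
  { unfold S. rewrite scal_sum. apply sum_eq. intros i _.
    rewrite Cmod_multiplier_diff, Rpow_mult_distr, pow2_abs. ring. }
  assert (Hweight : Rpower W (/ 2) = Rpower W (- / 2) * W).
  { replace (/ 2) with (- / 2 + 1) at 1 by field. rewrite Rpower_plus, Rpower_1; auto. }
  assert (Hgap2 : (lam1 n - lam2 n) ^ 2 * W <= eps ^ 2).
  { generalize (sobolev_weight_le n) (nu_ge_half n) (Rabs_pos (lam1 n - lam2 n)). intros.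
    rewrite <- pow2_abs.
    apply Rle_trans with (Rabs (lam1 n - lam2 n) ^ 2 * (2 * nu n) ^ 2);
      [apply Rmult_le_compat_l; [apply pow2_ge_0 | unfold W; lra] |].
    replace (Rabs (lam1 n - lam2 n) ^ 2 * (2 * nu n) ^ 2) with ((2 * nu n * Rabs (lam1 n - lam2 n)) ^ 2)
      by ring.
    apply pow_incr. split; [apply Rmult_le_pos; lra | exact Hgap]. }
  rewrite Hsum, Hweight. generalize (Rpower_pos W (- / 2)). intros HP.
  replace (Rpower W (- / 2) * W * ((lam1 n - lam2 n) ^ 2 * S))
    with ((Rpower W (- / 2) * S) * ((lam1 n - lam2 n) ^ 2 * W)) by ring.
  rewrite (Rmult_comm (eps ^ 2)).
  apply Rmult_le_compat_l; [nra | exact Hgap2].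
Qed.

Lemma opnorm_multiplier_diff_le (lam1 lam2 : nat -> R) (eps : R) : 0 <= eps ->
  (forall n, 2 * nu n * Rabs (lam1 n - lam2 n) <= eps) ->
  Rbar_le (opnorm_m12_12 (fun c n j => Cminus (multiplier lam1 c n j) (multiplier lam2 c n j))) eps.
Proof.
  intros Heps Hgap. apply (proj1 (Glb_Rbar_correct _)). split; [exact Heps |].
  intros c Hc. unfold hs_normsq.
  rewrite <- (Lim_seq_const (eps ^ 2 * Series (hs_term (- / 2) c))).
  apply Lim_seq_le_loc. exists O. intros N _.
  apply Rle_trans with (eps ^ 2 * sum_n (hs_term (- / 2) c) N).
  - rewrite !sum_n_Reals, scal_sum. apply sum_Rle. intros k _.
    rewrite Rmult_comm. apply hs_term_multiplier_diff_le, Hgap.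
  - apply Rmult_le_compat_l; [apply pow2_ge_0 |].
    apply sum_n_le_series; [intros; apply hs_term_ge_0 | apply Series_correct, Hc].
Qed.

(** * The two limits *)

Lemma lam_gap_near_1 (n : nat) (s r : R) : 0 < r < 1 -> Rabs (s - 1) < / 2 ->
  400 * (sqrt r / r) * Rabs (s - 1) <= 1 ->
  2 * nu n * Rabs (lam_cs s r n - lam_hom n) <= 400 * (sqrt r / r) * Rabs (s - 1).
Proof.
  intros Hr He Hsmall.
  assert (HE := shell_mismatch_near_1 n s r Hr He). assert (HP := Rpower_nu_le_sqrt n r Hr).
  set (e := Rabs (s - 1)) in *. generalize (Rabs_pos (s - 1)). fold e. intros He0.
  assert (Hs : / 2 < s < 3 / 2) by (unfold e in He; apply Rabs_def2 in He; lra).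
  assert (Hsr : 0 < sqrt r) by (apply sqrt_lt_R0; lra).
  assert (HR0 : sqrt r / r * r = sqrt r) by (field; lra).
  assert (HsrR : sqrt r <= sqrt r / r) by (apply (Rmult_le_reg_r r); [lra |]; rewrite HR0; nra).
  set (R0 := sqrt r / r) in *.
  assert (HT : / 3 <= sqrt s ^ 3).
  { assert (Htt : sqrt s * sqrt s = s) by (apply sqrt_sqrt; lra).
    generalize (sqrt_lt_R0 s ltac:(lra)). intros Ht. assert (7 / 10 < sqrt s) by nra. simpl. nra. }
  assert (Hnu := nu_ge_half n).
  assert (HB : Rpower r (nu n) * Rabs (shell_mismatch n s r) <= R0 * r * (25 * e * nu n))
    by (rewrite HR0; apply Rmult_le_compat; [left; apply Rpower_pos | apply Rabs_pos | lra | lra]).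
  replace (400 * R0 * e) with (4 * (75 * R0 * e) + 4 * (25 * R0 * e)) by ring.
  apply lam_gap_le; [lra | lra | nra | | left; nra | lra].
  rewrite HR0 in HB.
  assert (sqrt r * (e * nu n) <= R0 * (e * nu n)) by (apply Rmult_le_compat_r; nra).
  assert (R0 * (e * nu n) * 1 <= R0 * (e * nu n) * (3 * sqrt s ^ 3))
    by (apply Rmult_le_compat_l; [apply Rmult_le_pos; nra | lra]).
  nra.
Qed.

Lemma lam_gap_small_radius_pos (n : nat) (s r : R) : (1 <= n)%nat -> 0 < s -> 0 < r < 1 -> r < s ->
  6 * (sqrt s ^ 3 + 1) * sqrt r <= 1 ->
  2 * nu n * Rabs (lam_cs s r n - lam_hom n)
    <= 12 * (sqrt s ^ 3 + 1) * (/ sqrt s ^ 3 + 1) * sqrt r.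
Proof.
  intros Hn Hs Hr Hrs Hsmall.
  assert (Hrs2 : r * r <= 2 * s) by nra.
  assert (HE := shell_mismatch_le n s r Hs Hr Hrs2). assert (HP := Rpower_nu_le_mul_sqrt n r Hr Hn).
  assert (HT : 0 < sqrt s ^ 3) by (apply pow_lt, sqrt_lt_R0, Hs).
  set (T := sqrt s ^ 3) in *.
  assert (Hsr : 0 < sqrt r) by (apply sqrt_lt_R0; lra).
  assert (Hnu : 3 / 2 <= nu n) by (unfold nu; apply le_INR in Hn; simpl in Hn; lra).
  assert (HB : Rpower r (nu n) * Rabs (shell_mismatch n s r) <= r * (sqrt r * (3 * (T + 1) * nu n))).
  { rewrite <- Rmult_assoc. apply Rmult_le_compat; [left; apply Rpower_pos | apply Rabs_pos | lra | nra]. }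
  replace (12 * (T + 1) * (/ T + 1) * sqrt r)
    with (4 * (3 * (T + 1) / T * sqrt r) + 4 * (3 * (T + 1) * sqrt r)) by (field; lra).
  apply lam_gap_le; [lra | lra | exact Hrs2 | | left; nra | lra]. fold T.
  replace (3 * (T + 1) / T * sqrt r * (T * nu n)) with (sqrt r * (3 * (T + 1) * nu n)) by (field; lra).
  assert (0 <= sqrt r * (3 * (T + 1) * nu n)) by (repeat apply Rmult_le_pos; lra).
  nra.
Qed.

(* For n = 0, r^nu / r = r^{-1/2} is unbounded, so the bound on rho K'(1) through
   K'(1)/K(1) is used instead of the one through 1/r. *)
Lemma lam_gap_small_radius_0 (s r : R) : 0 < s -> 0 < r < 1 -> r < s ->
  40 * (sqrt s ^ 3 + 1) * Kh_ratio 0 / sqrt s ^ 3 * sqrt r <= 1 ->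
  2 * nu 0 * Rabs (lam_cs s r 0 - lam_hom 0)
    <= (20 * (sqrt s ^ 3 + 1) / sqrt s ^ 3 + 40 * (sqrt s ^ 3 + 1) * Kh_ratio 0 / sqrt s ^ 3) * sqrt r.
Proof.
  intros Hs Hr Hrs Hsmall.
  assert (Hrs2 : r * r <= 2 * s) by nra.
  assert (HE := shell_mismatch_le 0 s r Hs Hr Hrs2).
  assert (HT : 0 < sqrt s ^ 3) by (apply pow_lt, sqrt_lt_R0, Hs).
  set (T := sqrt s ^ 3) in *.
  assert (Hsr : 0 < sqrt r) by (apply sqrt_lt_R0; lra).
  assert (Hnu : nu 0 = / 2) by (unfold nu; simpl; ring).
  assert (HQ := Kh_ratio_ge_0 0).
  assert (HB : Rpower r (nu 0) * Rabs (shell_mismatch 0 s r) <= sqrt r * (5 / 2 * (T + 1))).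
  { rewrite Hnu in *. rewrite Rpower_sqrt by lra. apply Rmult_le_compat_l; lra. }
  replace ((20 * (T + 1) / T + 40 * (T + 1) * Kh_ratio 0 / T) * sqrt r)
    with (4 * (5 * (T + 1) / T * sqrt r) + 4 * (10 * (T + 1) * Kh_ratio 0 / T * sqrt r)) by (field; lra).
  apply lam_gap_le; [lra | lra | exact Hrs2 | | right | lra]; fold T; rewrite Hnu in *.
  - replace (5 * (T + 1) / T * sqrt r * (T * / 2)) with (sqrt r * (5 / 2 * (T + 1))) by (field; lra).
    exact HB.
  - replace (10 * (T + 1) * Kh_ratio 0 / T * sqrt r * / 2 * (T * / 2))
      with (sqrt r * (5 / 2 * (T + 1)) * Kh_ratio 0) by (field; lra).
    apply Rmult_le_compat_r; assumption.
Qed.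

Lemma lam_gap_small_radius (s : R) : 0 < s -> exists C, 0 < C /\
  forall n r, 0 < r < 1 -> r < s -> C * sqrt r <= 1 ->
    2 * nu n * Rabs (lam_cs s r n - lam_hom n) <= C * sqrt r.
Proof.
  intros Hs. assert (HT : 0 < sqrt s ^ 3) by (apply pow_lt, sqrt_lt_R0, Hs).
  set (T := sqrt s ^ 3) in *. assert (HQ := Kh_ratio_ge_0 0).
  set (C1 := 12 * (T + 1) * (/ T + 1)).
  set (C0 := 20 * (T + 1) / T + 40 * (T + 1) * Kh_ratio 0 / T).
  assert (HC1 : 0 < C1) by (unfold C1; generalize (Rinv_0_lt_compat T HT); nra).
  assert (HC0 : 0 <= 40 * (T + 1) * Kh_ratio 0 / T)
    by (unfold Rdiv; apply Rmult_le_pos; [nra | left; apply Rinv_0_lt_compat, HT]).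
  assert (HC0' : 0 <= 20 * (T + 1) / T)
    by (unfold Rdiv; apply Rmult_le_pos; [nra | left; apply Rinv_0_lt_compat, HT]).
  exists (C1 + C0 + 6 * (T + 1)). split; [unfold C0; lra |].
  intros n r Hr Hrs Hsmall. assert (Hsr : 0 < sqrt r) by (apply sqrt_lt_R0; lra).
  assert (HC : forall C, 0 <= C -> C <= C1 + C0 + 6 * (T + 1) -> C * sqrt r <= (C1 + C0 + 6 * (T + 1)) * sqrt r)
    by (intros; apply Rmult_le_compat_r; lra).
  unfold C0, C1, T in *.
  destruct n as [|n].
  - eapply Rle_trans; [apply lam_gap_small_radius_0; auto |]; [| apply HC]; nra.
  - eapply Rle_trans; [apply lam_gap_small_radius_pos; auto; [lia |] |]; [| apply HC]; nra.
Qed.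

Lemma NtD_diff_vanishes_as_sigma_to_1 (r1 : R) : 0 < r1 < 1 ->
  forall eps : R, 0 < eps -> exists delta : R, 0 < delta /\
    forall s1 : R, 0 < s1 -> s1 <> 1 -> Rabs (s1 - 1) < delta ->
      Rbar_le (opnorm_m12_12 (NtD_diff s1 r1)) (Finite eps).
Proof.
  intros Hr eps Heps.
  assert (HC : 0 < 400 * (sqrt r1 / r1))
    by (apply Rmult_lt_0_compat; [lra | apply Rdiv_lt_0_compat; [apply sqrt_lt_R0 |]; lra]).
  set (C := 400 * (sqrt r1 / r1)) in *. set (m := Rmin eps 1).
  assert (Hm : 0 < m <= eps /\ m <= 1)
    by (unfold m; split; [split; [apply Rmin_glb_lt |  apply Rmin_l] | apply Rmin_r]; lra).
  exists (Rmin (/ 2) (m / C)). split; [apply Rmin_glb_lt; [lra | apply Rdiv_lt_0_compat; lra] |].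
  intros s1 Hs1 _ Hd.
  generalize (Rmin_l (/ 2) (m / C)) (Rmin_r (/ 2) (m / C)). intros Hd1 Hd2.
  assert (HCe : C * Rabs (s1 - 1) <= m).
  { apply (Rmult_le_reg_r (/ C)); [apply Rinv_0_lt_compat, HC |].
    replace (C * Rabs (s1 - 1) * / C) with (Rabs (s1 - 1)) by (field; lra). unfold Rdiv in Hd2. lra. }
  unfold NtD_diff, NtD_cs, NtD_hom. apply opnorm_multiplier_diff_le; [lra |].
  intros n. eapply Rle_trans; [apply lam_gap_near_1; [exact Hr | lra | fold C; lra] |]. fold C. lra.
Qed.

Lemma NtD_diff_vanishes_as_radius_to_0 (s1 : R) : 0 < s1 ->
  forall eps : R, 0 < eps -> exists delta : R, 0 < delta /\
    forall r1 : R, 0 < r1 < 1 -> r1 < delta ->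
      Rbar_le (opnorm_m12_12 (NtD_diff s1 r1)) (Finite eps).
Proof.
  intros Hs eps Heps. destruct (lam_gap_small_radius s1 Hs) as [C [HC Hgap]].
  set (m := Rmin eps 1).
  assert (Hm : 0 < m <= eps /\ m <= 1)
    by (unfold m; split; [split; [apply Rmin_glb_lt |  apply Rmin_l] | apply Rmin_r]; lra).
  set (eta := m / C).
  assert (Heta : 0 < eta) by (apply Rdiv_lt_0_compat; lra).
  exists (Rmin s1 (eta * eta)). split; [apply Rmin_glb_lt; nra |].
  intros r Hr Hrd. generalize (Rmin_l s1 (eta * eta)) (Rmin_r s1 (eta * eta)). intros Hd1 Hd2.
  assert (Hsqrt : sqrt r <= eta)
    by (rewrite <- (sqrt_square eta) by lra; apply sqrt_le_1; lra).
  assert (HCr : C * sqrt r <= m).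
  { replace m with (C * eta) by (unfold eta; field; lra). apply Rmult_le_compat_l; lra. }
  unfold NtD_diff, NtD_cs, NtD_hom. apply opnorm_multiplier_diff_le; [lra |].
  intros n. eapply Rle_trans; [apply Hgap; lra |]. lra.
Qed.

Theorem theorem3p1 :
  (forall r1 : R, 0 < r1 < 1 ->
     forall eps : R, 0 < eps ->
       exists delta : R, 0 < delta /\
         forall s1 : R, 0 < s1 -> s1 <> 1 -> Rabs (s1 - 1) < delta ->
           Rbar_le (opnorm_m12_12 (NtD_diff s1 r1)) (Finite eps))
  /\
  (forall s1 : R, 0 < s1 ->
     forall eps : R, 0 < eps ->
       exists delta : R, 0 < delta /\
         forall r1 : R, 0 < r1 < 1 -> r1 < delta ->
           Rbar_le (opnorm_m12_12 (NtD_diff s1 r1)) (Finite eps)).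
Proof.
  split.
  - exact NtD_diff_vanishes_as_sigma_to_1.
  - exact NtD_diff_vanishes_as_radius_to_0.
Qed.
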